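(* Let $\alpha\in\mathbb C\setminus[0,\infty)$ with $\mathrm{Re}(\alpha)>0$, and let $s\in\mathbb C$ with $\mathrm{Re}(s)>1$ and $\mathrm{Re}(s)>\mathrm{Re}(\alpha)$. Then $\Phi_\alpha(x)/x^{s+1}$ is Lebesgue integrable on $(1,\infty)$ and $$1-\frac s\alpha=\exp\left[-s(s-1)\int_1^\infty\frac{\Phi_\alpha(x)}{x^{s+1}}\,dx\right].$$
   Context: $\gamma$ is Euler's constant, $\log$ denotes the principal branch on $\mathbb C\setminus(-\infty,0]$, $\mathrm{Ei}_0(z):=\sum_{k\ge1}\frac{z^k}{k\cdot k!}$ (entire), and for $\alpha\in\mathbb C\setminus[0,\infty)$ and $x>1$, $$\varphi_\alpha(x):=\gamma+\log(\log x)+\log(-\alpha)+\mathrm{Ei}_0(\alpha\log x),\qquad \Phi_\alpha(x):=x\int_1^x\frac{\varphi_\alpha(y)}{y^2}\,dy.$$ *)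

From Stdlib Require Import Reals Lra ClassicalEpsilon Arith.Factorial.
Open Scope R_scope.

Definition Cplx : Type := (R * R)%type.
Definition Re (z : Cplx) : R := fst z.
Definition Im (z : Cplx) : R := snd z.
Definition CR (x : R) : Cplx := (x, 0).
Definition Cadd (z w : Cplx) : Cplx := (Re z + Re w, Im z + Im w).
Definition Copp (z : Cplx) : Cplx := (- Re z, - Im z).
Definition Csub (z w : Cplx) : Cplx := Cadd z (Copp w).
Definition Cmul (z w : Cplx) : Cplx :=
  (Re z * Re w - Im z * Im w, Re z * Im w + Im z * Re w).
Definition Cinv (z : Cplx) : Cplx :=
  (Re z / (Re z ^ 2 + Im z ^ 2), - Im z / (Re z ^ 2 + Im z ^ 2)).
Definition Cdiv (z w : Cplx) : Cplx := Cmul z (Cinv w).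
Definition Cnorm (z : Cplx) : R := sqrt (Re z ^ 2 + Im z ^ 2).
Fixpoint Cpow (z : Cplx) (n : nat) : Cplx :=
  match n with O => CR 1 | S n => Cmul z (Cpow z n) end.

Definition Cexp (z : Cplx) : Cplx := (exp (Re z) * cos (Im z), exp (Re z) * sin (Im z)).

(** principal argument on Cplx \ (-oo,0]:  Arg z = 2 atan (Im z / (|z| + Re z)),
    which lies in (-pi, pi); principal logarithm log z = ln|z| + i Arg z. *)
Definition Carg (z : Cplx) : R := 2 * atan (Im z / (Cnorm z + Re z)).
Definition Clog (z : Cplx) : Cplx := (ln (Cnorm z), Carg z).

Definition Crpow (x : R) (w : Cplx) : Cplx := Cexp (Cmul w (CR (ln x))).

Definition C_cv (u : nat -> Cplx) (l : Cplx) : Prop :=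
  Un_cv (fun n => Re (u n)) (Re l) /\ Un_cv (fun n => Im (u n)) (Im l).
Definition Clim (u : nat -> Cplx) : Cplx :=
  epsilon (inhabits (CR 0)) (fun l => C_cv u l).

Definition euler_gamma : R :=
  epsilon (inhabits 0)
    (fun g => Un_cv (fun n => sum_f_R0 (fun k => / INR (S k)) n - ln (INR (S n))) g).

Fixpoint Ei0_partial (z : Cplx) (n : nat) : Cplx :=
  match n with
  | O => CR 0
  | S m => Cadd (Ei0_partial z m)
                (Cdiv (Cpow z (S m)) (CR (INR (S m) * INR (fact (S m)))))
  end.
Definition Ei0 (z : Cplx) : Cplx := Clim (Ei0_partial z).

Definition phi (alpha : Cplx) (x : R) : Cplx :=
  Cadd (Cadd (Cadd (CR euler_gamma) (Clog (CR (ln x)))) (Clog (Copp alpha)))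
       (Ei0 (Cmul alpha (CR (ln x)))).

Definition is_RInt (f : R -> R) (a b v : R) : Prop :=
  exists pr : Riemann_integrable f a b, RiemannInt pr = v.
Definition is_CRInt (f : R -> Cplx) (a b : R) (v : Cplx) : Prop :=
  is_RInt (fun x => Re (f x)) a b (Re v) /\ is_RInt (fun x => Im (f x)) a b (Im v).
Definition C_RI (f : R -> Cplx) (a b : R) : Prop := exists v, is_CRInt f a b v.

Definition has_Cint_open (f : R -> Cplx) (a b : R) (v : Cplx) : Prop :=
  (forall c d, a < c -> c <= d -> d < b -> C_RI f c d) /\
  (forall eps, 0 < eps -> exists delta, 0 < delta /\
     forall c d, a < c < a + delta -> b - delta < d < b -> c <= d ->
       exists w, is_CRInt f c d w /\ Cnorm (Csub w v) < eps).
Definition Cint_open (f : R -> Cplx) (a b : R) : Cplx :=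
  epsilon (inhabits (CR 0)) (fun v => has_Cint_open f a b v).

Definition has_Cint_infty (f : R -> Cplx) (a : R) (v : Cplx) : Prop :=
  (forall c d, a < c -> c <= d -> C_RI f c d) /\
  (forall eps, 0 < eps -> exists delta, 0 < delta /\ exists M,
     forall c d, a < c < a + delta -> M < d -> c <= d ->
       exists w, is_CRInt f c d w /\ Cnorm (Csub w v) < eps).

(** Lebesgue integrability on (a, +oo) of a function that is Riemann integrable
    on every compact subinterval: the integrals of |f| over the compact
    subintervals [c,d] of (a,+oo) are bounded (monotone convergence). *)
Definition Leb_integrable_infty (f : R -> Cplx) (a : R) : Prop :=
  (forall c d, a < c -> c <= d -> C_RI f c d) /\
  (exists M, forall c d, a < c -> c <= d ->
     exists w, is_RInt (fun x => Cnorm (f x)) c d w /\ w <= M).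

Definition Phi (alpha : Cplx) (x : R) : Cplx :=
  Cmul (CR x) (Cint_open (fun y => Cdiv (phi alpha y) (CR (y ^ 2))) 1 x).

From Pilot Require Import Defs.
From Stdlib Require Import Reals Lra Lia ClassicalEpsilon Arith.Factorial.
From Coquelicot Require Import Coquelicot.
(* Coquelicot also defines [Re] and [Im]; the ones of [Defs] must take precedence. *)
Import Defs.
Open Scope R_scope.

(* The integrand has an explicit primitive, so every integral is a difference of boundary terms.
   Since [d/du (ln u + Ei0 (b u)) = e^{b u} / u], the function
   [Psi a x = phi_{a-1}(x) - phi_a(x) / x - log (1 - a) + log (-a)] satisfies [Psi' = phi_a / x^2]
   and [Psi (1+) = 0] (the [ln (ln x)] singularities cancel), so [Phi_a = x Psi].  Likewise
   [F x = Psi x x^{1-s} / (1-s) - (phi_{a-s}(x) - phi_a(x) x^{-s}) / (s (1-s))] is a primitive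
   of [Phi_a(x) / x^{s+1}].  As [x -> +oo], [F -> 0]: the [Psi] and [phi_a] terms decay because
   [Re s > max 1 (Re a)], and [phi_{a-s}(x) -> 0] because [gamma + ln T + Ei0 (-T) -> 0] as
   [T -> +oo], while rotating the argument [(a-s) ln x] of [Ei0] onto the negative axis along a
   circular arc changes [log + Ei0] only by an exponentially small amount.  As [x -> 1+],
   [F -> - (log (s-a) - log (-a)) / (s (1-s))].  So the integral is
   [(log (s-a) - log (-a)) / (s (1-s))], and [exp (- s (s-1) I) = (s-a) / (-a) = 1 - s/a]. *)

Lemma Cplx_eq (z w : Cplx) : Re z = Re w -> Im z = Im w -> z = w.
Proof. destruct z, w; unfold Re, Im; simpl; intros; subst; reflexivity. Qed.

Ltac csimpl := unfold Csub, Cdiv, Cadd, Copp, Cmul, Cinv, CR, Re, Im in *; cbn [fst snd] in *.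
Ltac ceq := apply Cplx_eq; csimpl.

Lemma Re_mul z w : Re (Cmul z w) = Re z * Re w - Im z * Im w. Proof. reflexivity. Qed.
Lemma Re_CR x : Re (CR x) = x. Proof. reflexivity. Qed.
Lemma Im_CR x : Im (CR x) = 0. Proof. reflexivity. Qed.
Lemma Re_opp z : Re (Copp z) = - Re z. Proof. reflexivity. Qed.
Lemma Im_opp z : Im (Copp z) = - Im z. Proof. reflexivity. Qed.
Lemma Re_sub z w : Re (Csub z w) = Re z - Re w. Proof. reflexivity. Qed.
Lemma Im_sub z w : Im (Csub z w) = Im z - Im w. Proof. reflexivity. Qed.

(* [Cplx] and its norm are Coquelicot's [C] and [Cmod] up to conversion. *)
Lemma Cnorm_Cmod z : Cnorm z = Cmod z. Proof. reflexivity. Qed.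
Lemma Cnorm_ge0 z : 0 <= Cnorm z. Proof. apply sqrt_pos. Qed.
Lemma Cnorm_mul z w : Cnorm (Cmul z w) = Cnorm z * Cnorm w.
Proof. rewrite !Cnorm_Cmod. apply (Cmod_mult z w). Qed.
Lemma Cnorm_add z w : Cnorm (Cadd z w) <= Cnorm z + Cnorm w.
Proof. rewrite !Cnorm_Cmod. apply (Cmod_triangle z w). Qed.
Lemma Cnorm_opp z : Cnorm (Copp z) = Cnorm z.
Proof. rewrite !Cnorm_Cmod. apply (Cmod_opp z). Qed.
Lemma Cnorm_sub z w : Cnorm (Csub z w) <= Cnorm z + Cnorm w.
Proof. unfold Csub. eapply Rle_trans. apply Cnorm_add. rewrite Cnorm_opp; lra. Qed.
Lemma Cnorm_sub_sym z w : Cnorm (Csub z w) = Cnorm (Csub w z).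
Proof. unfold Cnorm; csimpl. f_equal. ring. Qed.
Lemma Cnorm_CR x : Cnorm (CR x) = Rabs x.
Proof. rewrite Cnorm_Cmod. apply (Cmod_R x). Qed.
Lemma Cnorm_CRmul a w : Cnorm (Cmul (CR a) w) = Rabs a * Cnorm w.
Proof. rewrite Cnorm_mul, Cnorm_CR; auto. Qed.
Lemma Cnorm_mulCR w a : Cnorm (Cmul w (CR a)) = Cnorm w * Rabs a.
Proof. rewrite Cnorm_mul, Cnorm_CR; auto. Qed.
Lemma Re_le_Cnorm z : Rabs (Re z) <= Cnorm z.
Proof. rewrite Cnorm_Cmod. apply (re_le_Cmod z). Qed.
Lemma Im_le_Cnorm z : Rabs (Im z) <= Cnorm z.
Proof. rewrite Cnorm_Cmod. eapply Rle_trans; [|apply (Rmax_Cmod z)]. apply Rmax_r. Qed.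
Lemma Cnorm_le_Re_Im w : Cnorm w <= Rabs (Re w) + Rabs (Im w).
Proof. replace w with (Cadd (CR (Re w)) (Cmul (CR (Im w)) (0, 1))) at 1 by (ceq; ring).
  eapply Rle_trans. apply Cnorm_add. rewrite Cnorm_mul, !Cnorm_CR.
  replace (Cnorm (0, 1)) with 1; [lra|]. unfold Cnorm, Re, Im; cbn [fst snd].
  replace (0 ^ 2 + 1 ^ 2) with 1 by ring. now rewrite sqrt_1. Qed.
Lemma Cnorm_eq0 z : Cnorm z = 0 -> z = CR 0.
Proof. rewrite Cnorm_Cmod. intro H. apply Cmod_eq_0 in H. rewrite H. reflexivity. Qed.
Lemma Cnorm_pos z : z <> CR 0 -> 0 < Cnorm z.
Proof. intro H. destruct (Cnorm_ge0 z) as [h|h]; auto. exfalso; apply H, Cnorm_eq0; auto. Qed.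
Lemma Cnorm_sq z : Cnorm z * Cnorm z = Re z * Re z + Im z * Im z.
Proof. unfold Cnorm. rewrite sqrt_sqrt. ring. nra. Qed.
Lemma Cnorm_le_eq0 z : (forall e, 0 < e -> Cnorm z < e) -> z = CR 0.
Proof. intro H. apply Cnorm_eq0. destruct (Cnorm_ge0 z) as [h|h]; auto.
  specialize (H _ h). lra. Qed.

Lemma neq0_of_Re z : Re z <> 0 -> z <> CR 0.
Proof. intros H h. apply H. rewrite h. reflexivity. Qed.
Lemma Cmul_inv z : z <> CR 0 -> Cmul z (Cinv z) = CR 1.
Proof. intro H. destruct z as [a b]. unfold Re, Im in *; simpl in *.
  assert (a ^ 2 + b ^ 2 <> 0).
  { intro h. apply H. assert (a = 0) by nra. assert (b = 0) by nra. subst. reflexivity. }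
  ceq; field; auto. Qed.
Lemma Cinv_CR x : x <> 0 -> Cinv (CR x) = CR (/ x).
Proof. intro. ceq; field; auto. Qed.
Lemma Cinv_unique w z : w <> CR 0 -> Cmul w z = CR 1 -> z = Cinv w.
Proof. intros Hw H. transitivity (Cmul (Cmul w (Cinv w)) z); [rewrite Cmul_inv by auto; ceq; ring|].
  transitivity (Cmul (Cinv w) (Cmul w z)); [ceq; ring|]. rewrite H. ceq; ring. Qed.

(* The Stdlib rules are stated for [plus_fct] etc.; these restate them for
   eta-expanded functions, which is the form [apply] can unify with. *)
Definition has_deriv (f : R -> R) x l := derivable_pt_lim f x l.

Lemma has_deriv_eq f x a b : has_deriv f x a -> a = b -> has_deriv f x b.
Proof. intros; subst; auto. Qed.
Lemma has_deriv_plus f g x a b :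
  has_deriv f x a -> has_deriv g x b -> has_deriv (fun t => f t + g t) x (a + b).
Proof. intros; exact (derivable_pt_lim_plus _ _ _ _ _ H H0). Qed.
Lemma has_deriv_minus f g x a b :
  has_deriv f x a -> has_deriv g x b -> has_deriv (fun t => f t - g t) x (a - b).
Proof. intros; exact (derivable_pt_lim_minus _ _ _ _ _ H H0). Qed.
Lemma has_deriv_mult f g x a b : has_deriv f x a -> has_deriv g x b ->
  has_deriv (fun t => f t * g t) x (a * g x + f x * b).
Proof. intros; exact (derivable_pt_lim_mult _ _ _ _ _ H H0). Qed.
Lemma has_deriv_opp f x a : has_deriv f x a -> has_deriv (fun t => - f t) x (- a).
Proof. intros; exact (derivable_pt_lim_opp _ _ _ H). Qed.
Lemma has_deriv_const c x : has_deriv (fun _ => c) x 0.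
Proof. exact (derivable_pt_lim_const c x). Qed.
Lemma has_deriv_id x : has_deriv (fun t => t) x 1.
Proof. exact (derivable_pt_lim_id x). Qed.
Lemma has_deriv_scal c f x a : has_deriv f x a -> has_deriv (fun t => c * f t) x (c * a).
Proof. intro H. eapply has_deriv_eq. apply has_deriv_mult. apply has_deriv_const. exact H. cbv beta; ring. Qed.
Lemma has_deriv_comp f g x a b :
  has_deriv g x a -> has_deriv f (g x) b -> has_deriv (fun t => f (g t)) x (b * a).
Proof. intros; exact (derivable_pt_lim_comp _ _ _ _ _ H H0). Qed.
Lemma has_deriv_ext_loc f g x a : (exists d, 0 < d /\ forall t, Rabs (t - x) < d -> f t = g t) ->
  has_deriv f x a -> has_deriv g x a.
Proof. intros [d [Hd He]] H. unfold has_deriv in *. apply is_derive_Reals in H. apply is_derive_Reals.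
  eapply is_derive_ext_loc; [|exact H]. exists (mkposreal d Hd). intros t Ht. apply He. exact Ht. Qed.
Lemma has_deriv_ext f g x a : (forall t, f t = g t) -> has_deriv f x a -> has_deriv g x a.
Proof. intros He H. apply (has_deriv_ext_loc f); auto. exists 1; split; [lra|auto]. Qed.
Lemma has_deriv_continuous f x a : has_deriv f x a -> continuity_pt f x.
Proof. intro H. apply derivable_continuous_pt. exists a. exact H. Qed.
Lemma has_deriv_exp f x a : has_deriv f x a -> has_deriv (fun t => exp (f t)) x (exp (f x) * a).
Proof. intro H. eapply has_deriv_eq. apply (has_deriv_comp exp f x a); auto.
  apply derivable_pt_lim_exp. cbv beta; ring. Qed.
Lemma has_deriv_cos f x a : has_deriv f x a -> has_deriv (fun t => cos (f t)) x (- sin (f x) * a).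
Proof. intro H. eapply has_deriv_eq. apply (has_deriv_comp cos f x a); auto.
  apply derivable_pt_lim_cos. cbv beta; ring. Qed.
Lemma has_deriv_sin f x a : has_deriv f x a -> has_deriv (fun t => sin (f t)) x (cos (f x) * a).
Proof. intro H. eapply has_deriv_eq. apply (has_deriv_comp sin f x a); auto.
  apply derivable_pt_lim_sin. cbv beta; ring. Qed.
Lemma has_deriv_ln f x a : has_deriv f x a -> 0 < f x -> has_deriv (fun t => ln (f t)) x (a / f x).
Proof. intros H Hp. eapply has_deriv_eq. apply (has_deriv_comp ln f x a); auto.
  apply derivable_pt_lim_ln; auto. unfold Rdiv; cbv beta; ring. Qed.
Lemma has_deriv_inv f x a : has_deriv f x a -> f x <> 0 -> has_deriv (fun t => / f t) x (- a / (f x)^2).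
Proof. intros H Hn. unfold has_deriv in *. apply is_derive_Reals in H. apply is_derive_Reals.
  apply (is_derive_inv f x a H Hn). Qed.

Definition has_cderiv (f : R -> Cplx) x (l : Cplx) :=
  has_deriv (fun t => Re (f t)) x (Re l) /\ has_deriv (fun t => Im (f t)) x (Im l).

Lemma has_cderiv_eq f x a b : has_cderiv f x a -> a = b -> has_cderiv f x b.
Proof. intros; subst; auto. Qed.
Lemma has_cderiv_add f g x a b : has_cderiv f x a -> has_cderiv g x b ->
  has_cderiv (fun t => Cadd (f t) (g t)) x (Cadd a b).
Proof. intros [H1 H2] [H3 H4]; split; apply has_deriv_plus; auto. Qed.
Lemma has_cderiv_opp f x a : has_cderiv f x a -> has_cderiv (fun t => Copp (f t)) x (Copp a).
Proof. intros [H1 H2]; split; apply has_deriv_opp; auto. Qed.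
Lemma has_cderiv_sub f g x a b : has_cderiv f x a -> has_cderiv g x b ->
  has_cderiv (fun t => Csub (f t) (g t)) x (Csub a b).
Proof. intros. apply has_cderiv_add; auto. apply has_cderiv_opp; auto. Qed.
Lemma has_cderiv_mul f g x a b : has_cderiv f x a -> has_cderiv g x b ->
  has_cderiv (fun t => Cmul (f t) (g t)) x (Cadd (Cmul a (g x)) (Cmul (f x) b)).
Proof. intros [H1 H2] [H3 H4]; split; csimpl.
  - eapply has_deriv_eq. apply has_deriv_minus; apply has_deriv_mult; eauto. cbv beta; ring.
  - eapply has_deriv_eq. apply has_deriv_plus; apply has_deriv_mult; eauto. cbv beta; ring. Qed.
Lemma has_cderiv_const c x : has_cderiv (fun _ => c) x (CR 0).
Proof. split; apply has_deriv_const. Qed.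
Lemma has_cderiv_CR f x a : has_deriv f x a -> has_cderiv (fun t => CR (f t)) x (CR a).
Proof. intro H; split; simpl; [exact H|apply has_deriv_const]. Qed.
Lemma has_cderiv_cmul c f x a : has_cderiv f x a -> has_cderiv (fun t => Cmul c (f t)) x (Cmul c a).
Proof. intro H. eapply has_cderiv_eq. apply has_cderiv_mul. apply has_cderiv_const. exact H. ceq; ring. Qed.
Lemma has_cderiv_mulc c f x a : has_cderiv f x a -> has_cderiv (fun t => Cmul (f t) c) x (Cmul a c).
Proof. intro H. eapply has_cderiv_eq. apply has_cderiv_mul. exact H. apply has_cderiv_const. ceq; ring. Qed.
Lemma has_cderiv_linear w t : has_cderiv (fun u => Cmul w (CR u)) t w.
Proof. eapply has_cderiv_eq. apply has_cderiv_cmul, has_cderiv_CR, has_deriv_id. ceq; ring. Qed.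
Lemma has_cderiv_ext_loc f g x a : (exists d, 0 < d /\ forall t, Rabs (t - x) < d -> f t = g t) ->
  has_cderiv f x a -> has_cderiv g x a.
Proof. intros [d [Hd He]] [H1 H2]; split;
  [apply (has_deriv_ext_loc (fun t => Re (f t)))|apply (has_deriv_ext_loc (fun t => Im (f t)))]; auto;
  exists d; split; auto; intros t Ht; rewrite He; auto. Qed.
Lemma has_cderiv_ext f g x a : (forall t, f t = g t) -> has_cderiv f x a -> has_cderiv g x a.
Proof. intros He H. apply (has_cderiv_ext_loc f); auto. exists 1; split; [lra|auto]. Qed.
Lemma has_cderiv_continuous f x a : has_cderiv f x a ->
  continuity_pt (fun t => Re (f t)) x /\ continuity_pt (fun t => Im (f t)) x.
Proof. intros [H1 H2]; split; eapply has_deriv_continuous; eauto. Qed.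

Lemma Cexp_add z w : Cexp (Cadd z w) = Cmul (Cexp z) (Cexp w).
Proof. unfold Cexp; ceq; rewrite exp_plus, ?cos_plus, ?sin_plus; ring. Qed.
Lemma Cexp_0 : Cexp (CR 0) = CR 1.
Proof. unfold Cexp; ceq; rewrite ?exp_0, ?cos_0, ?sin_0; ring. Qed.
Lemma Cnorm_Cexp z : Cnorm (Cexp z) = exp (Re z).
Proof. destruct z as [a b]. unfold Cnorm, Cexp, Re, Im; cbn [fst snd].
  replace ((exp a * cos b) ^ 2 + (exp a * sin b) ^ 2) with (exp a ^ 2).
  - rewrite sqrt_pow2; auto. apply Rlt_le, exp_pos.
  - pose proof (sin2_cos2 b). unfold Rsqr in H. nra. Qed.
Lemma Cexp_neq0 z : Cexp z <> CR 0.
Proof. intro H. pose proof (Cnorm_Cexp z). rewrite H, Cnorm_CR, Rabs_R0 in H0.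
  pose proof (exp_pos (Re z)). lra. Qed.
Lemma Cexp_opp z : Cmul (Cexp z) (Cexp (Copp z)) = CR 1.
Proof. rewrite <- Cexp_add. replace (Cadd z (Copp z)) with (CR 0) by (ceq; ring). apply Cexp_0. Qed.
Lemma Cinv_Cexp z : Cinv (Cexp z) = Cexp (Copp z).
Proof. symmetry. apply Cinv_unique; [apply Cexp_neq0|apply Cexp_opp]. Qed.
Lemma has_cderiv_Cexp z x a : has_cderiv z x a -> has_cderiv (fun t => Cexp (z t)) x (Cmul (Cexp (z x)) a).
Proof. intros [H1 H2]. unfold Cexp; split; csimpl.
  - eapply has_deriv_eq. apply has_deriv_mult. apply has_deriv_exp; eauto.
    apply has_deriv_cos; eauto. cbv beta; ring.
  - eapply has_deriv_eq. apply has_deriv_mult. apply has_deriv_exp; eauto.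
    apply has_deriv_sin; eauto. cbv beta; ring. Qed.

(* With [u = y / (r + x)], the double-angle formulas give
   [cos (2 atan u) = x / r] and [sin (2 atan u) = y / r]. *)
Lemma Cexp_Clog z : ~ (Im z = 0 /\ Re z <= 0) -> Cexp (Clog z) = z.
Proof. intro H. destruct z as [x y]. unfold Clog, Carg, Cexp, Cnorm, Re, Im in *; cbn [fst snd] in *.
  set (r := sqrt (x^2+y^2)).
  assert (Hr : r * r = x^2 + y^2) by (unfold r; rewrite sqrt_sqrt; nra).
  assert (Hr0 : 0 <= r) by apply sqrt_pos.
  assert (Hrx : 0 < r + x).
  { destruct (Req_dec y 0). subst. assert (x > 0) by lra. nra.
    assert (y*y > 0) by (apply Rsqr_pos_lt; auto).
    destruct (Rle_lt_dec (r + x) 0); auto. exfalso.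
    assert (r <= -x) by lra. assert (r*r <= x*x) by nra. nra. }
  assert (Hrp : 0 < r) by (destruct (Req_dec y 0); [subst; nra| nra]).
  rewrite exp_ln by auto.
  set (u := y / (r + x)).
  replace (2 * atan u) with (atan u + atan u) by ring.
  rewrite cos_plus, sin_plus, cos_atan, sin_atan.
  set (c := sqrt (1 + u²)).
  assert (H1u : 0 < 1 + u*u) by nra.
  assert (Hs : c * c = 1 + u*u) by (unfold c; rewrite sqrt_sqrt; unfold Rsqr; lra).
  assert (Hcp : c <> 0) by (intro h; rewrite h in Hs; lra).
  replace (1 / c * (1 / c) - u / c * (u / c)) with ((1 - u*u)/(1+u*u)) by (rewrite <- Hs; field; auto).
  replace (u / c * (1 / c) + 1 / c * (u / c)) with (2*u/(1+u*u)) by (rewrite <- Hs; field; auto).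
  assert (E : (r+x)*(r+x) + y*y = 2*r*(r+x)) by nra.
  assert (E2 : (r+x)*(r+x) - y*y = 2*x*(r+x)) by nra.
  assert (Hrx0 : r + x <> 0) by lra.
  f_equal; unfold u.
  - replace ((1 - y / (r + x) * (y / (r + x))) / (1 + y / (r + x) * (y / (r + x)))) with
      (((r+x)*(r+x) - y*y) / ((r+x)*(r+x) + y*y)) by (field; split; auto; nra).
    rewrite E, E2. field. lra.
  - replace (2 * (y / (r + x)) / (1 + y / (r + x) * (y / (r + x)))) with
      (2 * y * (r + x) / ((r+x)*(r+x) + y*y)) by (field; split; auto; nra).
    rewrite E. field. lra.
Qed.

Lemma Clog_CR T : 0 < T -> Clog (CR T) = CR (ln T).
Proof. intro H. unfold Clog, Carg. rewrite Cnorm_CR, Rabs_right by lra. csimpl.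
  replace (0 / (T + T)) with 0 by (field; lra). rewrite atan_0. f_equal. ring. Qed.

Lemma Carg_bound b : 0 < Re b -> Rabs (Carg b) < PI / 2.
Proof. intro H. unfold Carg. pose proof (Im_le_Cnorm b). pose proof (Cnorm_ge0 b).
  set (u := Im b / (Cnorm b + Re b)).
  assert (Hu : -1 < u < 1).
  { unfold u. pose proof (Rle_abs (Im b)). pose proof (Rle_abs (- Im b)). rewrite Rabs_Ropp in H3.
    split; apply Rmult_lt_reg_r with (Cnorm b + Re b); try lra;
      unfold Rdiv; rewrite Rmult_assoc, Rinv_l, Rmult_1_r by lra; lra. }
  assert (atan u < PI / 4) by (rewrite <- atan_1; apply atan_increasing; lra).
  assert (- (PI / 4) < atan u) by (rewrite <- atan_1, <- atan_opp; apply atan_increasing; lra).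
  apply Rabs_def1; lra. Qed.

Lemma nondecreasing_of_deriv_nonneg h dh a b : a <= b ->
  (forall x, a <= x <= b -> has_deriv h x (dh x)) ->
  (forall x, a <= x <= b -> 0 <= dh x) -> h a <= h b.
Proof. intros Hab Hd Hp.
  destruct (MVT_gen h a b dh) as [c [Hc Hm]].
  - intros x Hx. rewrite Rmin_left, Rmax_right in Hx by lra. apply is_derive_Reals, Hd; lra.
  - intros x Hx. rewrite Rmin_left, Rmax_right in Hx by lra. eapply has_deriv_continuous, Hd; lra.
  - rewrite Rmin_left, Rmax_right in Hc by lra.
    assert (0 <= dh c * (b - a)) by (apply Rmult_le_pos; [apply Hp|]; lra). lra. Qed.

Lemma Rabs_increment_le W dW K k a b : a <= b ->
  (forall x, a <= x <= b -> has_deriv W x (dW x)) -> (forall x, a <= x <= b -> has_deriv K x (k x)) ->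
  (forall x, a <= x <= b -> Rabs (dW x) <= k x) -> Rabs (W b - W a) <= K b - K a.
Proof. intros Hab HW HK Hk. apply Rabs_le. split.
  - assert (K a + W a <= K b + W b); [|lra].
    apply (nondecreasing_of_deriv_nonneg (fun x => K x + W x) (fun x => k x + dW x)); auto.
    + intros. apply has_deriv_plus; auto.
    + intros x Hx. pose proof (Hk x Hx). apply Rabs_le_between in H. lra.
  - assert (K a - W a <= K b - W b); [|lra].
    apply (nondecreasing_of_deriv_nonneg (fun x => K x - W x) (fun x => k x - dW x)); auto.
    + intros. apply has_deriv_minus; auto.
    + intros x Hx. pose proof (Hk x Hx). apply Rabs_le_between in H. lra. Qed.

Lemma Cauchy_Schwarz2 p q r s : p * q + r * s <= sqrt (p^2 + r^2) * sqrt (q^2 + s^2).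
Proof. rewrite <- sqrt_mult by nra.
  destruct (Rle_lt_dec (p*q+r*s) 0). eapply Rle_trans. exact r0. apply sqrt_pos.
  rewrite <- (sqrt_pow2 (p*q+r*s)) by lra. apply sqrt_le_1_alt.
  assert (0 <= (p*s - r*q)^2) by apply pow2_ge_0. nra. Qed.

(* Project [G] onto the unit vector in the direction of [G b - G a] and compare
   the resulting real function with [K]. *)
Lemma Cnorm_increment_le (G dG : R -> Cplx) (K k : R -> R) a b : a <= b ->
  (forall x, a <= x <= b -> has_cderiv G x (dG x)) -> (forall x, a <= x <= b -> has_deriv K x (k x)) ->
  (forall x, a <= x <= b -> Cnorm (dG x) <= k x) -> Cnorm (Csub (G b) (G a)) <= K b - K a.
Proof. intros Hab HG HK Hk.
  set (d := Csub (G b) (G a)). set (n := Cnorm d).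
  destruct (Cnorm_ge0 d) as [Hn|Hn]; fold n in Hn.
  - set (proj := fun w => (Re d * Re w + Im d * Im w) / n).
    assert (Hproj : forall x, a <= x <= b -> proj (dG x) <= k x).
    { intros x Hx. eapply Rle_trans; [|apply Hk; auto]. unfold proj.
      apply Rmult_le_reg_l with n; auto.
      replace (n * ((Re d * Re (dG x) + Im d * Im (dG x)) / n))
        with (Re d * Re (dG x) + Im d * Im (dG x)) by (field; lra).
      apply Cauchy_Schwarz2. }
    assert (Hmono : K a - proj (G a) <= K b - proj (G b)).
    { apply (nondecreasing_of_deriv_nonneg (fun x => K x - proj (G x)) (fun x => k x - proj (dG x)));
        auto; [|intros x Hx; specialize (Hproj x Hx); lra].
      intros x Hx. apply has_deriv_minus; [apply HK; auto|]. unfold proj, Rdiv.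
      apply (has_deriv_ext (fun t => / n * (Re d * Re (G t) + Im d * Im (G t)))); [intro; ring|].
      eapply has_deriv_eq. apply has_deriv_scal.
      apply has_deriv_plus; apply has_deriv_scal; apply HG; auto. ring. }
    assert (proj (G b) - proj (G a) = n); [|lra].
    unfold proj, Rdiv. rewrite <- Rmult_minus_distr_r.
    replace (Re d * Re (G b) + Im d * Im (G b) - (Re d * Re (G a) + Im d * Im (G a))) with (n * n).
    + field. lra.
    + unfold n. rewrite Cnorm_sq. unfold d. csimpl. ring.
  - fold n. rewrite <- Hn. assert (K a <= K b); [|lra].
    apply (nondecreasing_of_deriv_nonneg K k); auto.
    intros. eapply Rle_trans. apply Cnorm_ge0. apply Hk; auto. Qed.

Lemma Cconst_of_deriv0 G a b : a <= b -> (forall x, a <= x <= b -> has_cderiv G x (CR 0)) -> G b = G a.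
Proof. intros Hab H.
  assert (Cnorm (Csub (G b) (G a)) <= 0 - 0).
  { apply (Cnorm_increment_le G (fun _ => CR 0) (fun _ => 0) (fun _ => 0)); auto.
    - intros; apply has_deriv_const.
    - intros; rewrite Cnorm_CR, Rabs_R0; lra. }
  assert (Csub (G b) (G a) = CR 0) by (apply Cnorm_eq0; pose proof (Cnorm_ge0 (Csub (G b) (G a))); lra).
  apply Cplx_eq; [apply (f_equal Re) in H1|apply (f_equal Im) in H1]; csimpl; lra. Qed.

(** * Power series with coefficients dominated by [1/k!] *)

Lemma Un_cv_const c : Un_cv (fun _ => c) c.
Proof. intros e He. exists O. intros. unfold Rdist. rewrite Rminus_diag, Rabs_R0. lra. Qed.

Lemma Un_cv_succ u l : Un_cv u l -> Un_cv (fun n => u (S n)) l.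
Proof. intros H e He. destruct (H e He) as [N HN]. exists N. intros m Hm. apply HN. lia. Qed.

Lemma C_cv_unique u l1 l2 : C_cv u l1 -> C_cv u l2 -> l1 = l2.
Proof. intros [a b] [c d]. apply Cplx_eq; eapply UL_sequence; eauto. Qed.
Lemma C_cv_ext u v l : (forall n, u n = v n) -> C_cv u l -> C_cv v l.
Proof. intros He [H1 H2]. split; eapply Un_cv_ext; eauto; intro; simpl; rewrite He; auto. Qed.
Lemma Clim_eq u l : C_cv u l -> Clim u = l.
Proof. intro H. unfold Clim. apply (C_cv_unique u); auto.
  apply (epsilon_spec (inhabits (CR 0)) (fun l => C_cv u l)). exists l; auto. Qed.

Lemma exp_series x : Un_cv (fun n => sum_f_R0 (fun i => / INR (fact i) * x ^ i) n) (exp x).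
Proof. unfold exp. destruct (exist_exp x) as [l Hl]. exact Hl. Qed.

Lemma exp_partial_cv M eps : 0 < eps -> exists N, forall m, (N <= m)%nat ->
  exp M - sum_f_R0 (fun i => / INR (fact i) * M ^ i) m < eps.
Proof. intro He. destruct (exp_series M eps He) as [N HN]. exists N. intros m Hm.
  specialize (HN m Hm). unfold Rdist in HN. apply Rabs_def2 in HN. lra. Qed.

Lemma fact_pos k : 0 < INR (fact k).
Proof. apply lt_0_INR. apply lt_O_fact. Qed.

Lemma Cnorm_Cpow z k : Cnorm (Cpow z k) = Cnorm z ^ k.
Proof. induction k; simpl. rewrite Cnorm_CR; apply Rabs_R1. rewrite Cnorm_mul, IHk. ring. Qed.
Lemma Cpow_CR x k : Cpow (CR x) k = CR (x ^ k).
Proof. induction k; simpl. reflexivity. rewrite IHk. ceq; ring. Qed.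

Definition coef_bounded (c : nat -> R) := forall k, Rabs (c k) <= / INR (fact k).

Fixpoint Cps_partial (c : nat -> R) (z : Cplx) (n : nat) : Cplx :=
  match n with
  | O => CR (c O)
  | S m => Cadd (Cps_partial c z m) (Cmul (CR (c (S m))) (Cpow z (S m)))
  end.
Definition Cps c z :=
  (Series (fun k => c k * Re (Cpow z k)), Series (fun k => c k * Im (Cpow z k))).

Lemma Re_Cps_partial c z n : Re (Cps_partial c z n) = sum_f_R0 (fun k => c k * Re (Cpow z k)) n.
Proof. induction n; simpl. unfold Re, CR; simpl; ring. rewrite <- IHn. csimpl. ring. Qed.
Lemma Im_Cps_partial c z n : Im (Cps_partial c z n) = sum_f_R0 (fun k => c k * Im (Cpow z k)) n.
Proof. induction n; simpl. unfold Im, CR; simpl; ring. rewrite <- IHn. csimpl. ring. Qed.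

Section BoundedCoefficients.
Variables (c : nat -> R) (z : Cplx).
Hypothesis Hc : coef_bounded c.

Lemma Cps_term_le k (w : R) : Rabs w <= Cnorm (Cpow z k) ->
  Rabs (c k * w) <= / INR (fact k) * Cnorm z ^ k.
Proof. intro Hw. rewrite Rabs_mult. rewrite Cnorm_Cpow in Hw.
  apply Rmult_le_compat; auto; apply Rabs_pos. Qed.

Lemma series_cv_of_exp_le (a : nat -> R) x : (forall k, Rabs (a k) <= / INR (fact k) * x ^ k) ->
  Un_cv (fun n => sum_f_R0 a n) (Series a).
Proof. intro H. apply is_series_Reals. apply Series_correct.
  apply (@ex_series_le R_AbsRing R_CompleteNormedModule) with (fun k => / INR (fact k) * x ^ k).
  - intro n. apply H.
  - exists (exp x). apply is_series_Reals. apply exp_series. Qed.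

Lemma Cps_partial_cv : C_cv (Cps_partial c z) (Cps c z).
Proof. split; simpl.
  - apply (Un_cv_ext (fun n => sum_f_R0 (fun k => c k * Re (Cpow z k)) n)).
    + intro; rewrite Re_Cps_partial; auto.
    + apply series_cv_of_exp_le with (Cnorm z). intro k. apply Cps_term_le, Re_le_Cnorm.
  - apply (Un_cv_ext (fun n => sum_f_R0 (fun k => c k * Im (Cpow z k)) n)).
    + intro; rewrite Im_Cps_partial; auto.
    + apply series_cv_of_exp_le with (Cnorm z). intro k. apply Cps_term_le, Im_le_Cnorm. Qed.

Lemma Cps_tail_le n M : Cnorm z <= M ->
  Cnorm (Csub (Cps c z) (Cps_partial c z n)) <= 2 * (exp M - sum_f_R0 (fun i => / INR (fact i) * M ^ i) n).
Proof. intro HM. eapply Rle_trans. apply Cnorm_le_Re_Im.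
  assert (Hb : forall k w, Rabs w <= Cnorm (Cpow z k) -> Rabs (c k * w) <= / INR (fact k) * M ^ k).
  { intros k w Hw. eapply Rle_trans. apply Cps_term_le, Hw.
    apply Rmult_le_compat_l. left; apply Rinv_0_lt_compat, fact_pos.
    apply pow_incr. split; auto. apply Cnorm_ge0. }
  destruct Cps_partial_cv as [Hre Him].
  assert (Rabs (Re (Csub (Cps c z) (Cps_partial c z n))) <= exp M - sum_f_R0 (fun i => / INR (fact i) * M ^ i) n).
  { rewrite Re_sub, Re_Cps_partial.
    apply (sum_maj1 (fun k _ => c k * Re (Cpow z k)) _ 0); [|apply exp_series|intro; apply Hb, Re_le_Cnorm].
    apply (Un_cv_ext (fun m => Re (Cps_partial c z m))); auto. intro; apply Re_Cps_partial. }
  assert (Rabs (Im (Csub (Cps c z) (Cps_partial c z n))) <= exp M - sum_f_R0 (fun i => / INR (fact i) * M ^ i) n).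
  { rewrite Im_sub, Im_Cps_partial.
    apply (sum_maj1 (fun k _ => c k * Im (Cpow z k)) _ 0); [|apply exp_series|intro; apply Hb, Im_le_Cnorm].
    apply (Un_cv_ext (fun m => Im (Cps_partial c z m))); auto. intro; apply Im_Cps_partial. }
  lra. Qed.

End BoundedCoefficients.

Lemma Cps_0 c : coef_bounded c -> Cps c (CR 0) = CR (c O).
Proof. intro Hc. apply (C_cv_unique (Cps_partial c (CR 0))); [apply Cps_partial_cv; auto|].
  assert (forall n, CR (c O) = Cps_partial c (CR 0) n).
  { induction n. reflexivity. simpl. rewrite <- IHn. ceq; ring. }
  apply (C_cv_ext (fun _ => CR (c O))); auto. split; apply Un_cv_const. Qed.

Lemma Im_Cps_real c x : coef_bounded c -> Im (Cps c (CR x)) = 0.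
Proof. intro Hc. destruct (Cps_partial_cv c (CR x) Hc) as [_ H2].
  apply (UL_sequence (fun n => Im (Cps_partial c (CR x) n))); auto.
  apply (Un_cv_ext (fun _ => 0)); [|apply Un_cv_const].
  assert (H0 : forall k, Im (Cpow (CR x) k) = 0) by (intro; rewrite Cpow_CR; reflexivity).
  intro n. rewrite Im_Cps_partial. induction n; simpl sum_f_R0; rewrite ?H0.
  ring. rewrite <- IHn. ring. Qed.

Lemma has_cderiv_Cpow z t dz k : has_cderiv z t dz ->
  has_cderiv (fun s => Cpow (z s) (S k)) t (Cmul (CR (INR (S k))) (Cmul (Cpow (z t) k) dz)).
Proof. intro H. induction k.
  - apply (has_cderiv_ext (fun s => Cmul (z s) (CR 1))). intro; simpl; reflexivity.
    eapply has_cderiv_eq. apply has_cderiv_mul. exact H. apply has_cderiv_const. simpl. ceq; ring.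
  - apply (has_cderiv_ext (fun s => Cmul (z s) (Cpow (z s) (S k)))). intro; reflexivity.
    eapply has_cderiv_eq. apply has_cderiv_mul. exact H. exact IHk.
    rewrite (S_INR (S k)). simpl Cpow. ceq; ring. Qed.

Lemma has_cderiv_Cps_partial c d z t dz n : (forall k, d k = INR (S k) * c (S k)) -> has_cderiv z t dz ->
  has_cderiv (fun s => Cps_partial c (z s) (S n)) t (Cmul (Cps_partial d (z t) n) dz).
Proof. intros Hd H. induction n.
  - simpl Cps_partial. eapply has_cderiv_eq. apply has_cderiv_add. apply has_cderiv_const.
    apply has_cderiv_cmul. apply (has_cderiv_Cpow z t dz 0 H).
    rewrite Hd. simpl Cpow. ceq; ring.
  - apply (has_cderiv_ext (fun s => Cadd (Cps_partial c (z s) (S n))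
      (Cmul (CR (c (S (S n)))) (Cpow (z s) (S (S n)))))); [intro; reflexivity|].
    eapply has_cderiv_eq. apply has_cderiv_add. exact IHn. apply has_cderiv_cmul.
    apply (has_cderiv_Cpow z t dz (S n) H).
    simpl Cps_partial. simpl Cpow. rewrite (Hd (S n)). ceq; ring. Qed.

Section TermwiseDerivative.
Variables (c d : nat -> R) (z dz : R -> Cplx) (t0 r M : R).
Hypotheses (Hc : coef_bounded c) (Hd : coef_bounded d) (Hcd : forall k, d k = INR (S k) * c (S k)).
Hypothesis Hr : 0 < r.
Hypothesis Hz : forall t, Rabs (t - t0) < r ->
  has_cderiv z t (dz t) /\ Cnorm (z t) <= M /\ Cnorm (dz t) <= M.

Lemma Cps_partial_deriv_CVU (p : Cplx -> R) :
  (forall w, Rabs (p w) <= Cnorm w) -> (forall w1 w2, p (Csub w1 w2) = p w1 - p w2) ->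
  CVU (fun n t => match n with O => 0 | S m => p (Cmul (Cps_partial d (z t) m) (dz t)) end)
      (fun t => p (Cmul (Cps d (z t)) (dz t))) t0 (mkposreal r Hr).
Proof. intros Hp Hlin eps He.
  destruct (exp_partial_cv M (eps / (2 * (Rabs M + 1)))) as [N HN].
  { apply Rdiv_lt_0_compat; auto. pose proof (Rabs_pos M); lra. }
  exists (S N). intros n y Hn Hy. destruct n as [|m]; [lia|].
  unfold Boule in Hy; simpl in Hy. destruct (Hz y Hy) as [_ [Hzy Hdzy]].
  rewrite <- Hlin.
  replace (Csub (Cmul (Cps d (z y)) (dz y)) (Cmul (Cps_partial d (z y) m) (dz y))) with
    (Cmul (Csub (Cps d (z y)) (Cps_partial d (z y) m)) (dz y)) by (ceq; ring).
  eapply Rle_lt_trans. apply Hp. rewrite Cnorm_mul.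
  pose proof (Cps_tail_le d (z y) Hd m M Hzy). specialize (HN m ltac:(lia)).
  assert (0 <= Cnorm (dz y)) by apply Cnorm_ge0.
  assert (0 <= M) by (eapply Rle_trans; [apply Cnorm_ge0|exact Hzy]).
  rewrite Rabs_right in HN by lra.
  apply Rle_lt_trans with (2 * (eps / (2 * (M + 1))) * M).
  { apply Rmult_le_compat; auto. apply Cnorm_ge0. lra. }
  replace (2 * (eps / (2 * (M + 1))) * M) with (eps * (M / (M+1))) by (field; lra).
  assert (M / (M+1) < 1) by (apply Rmult_lt_reg_r with (M+1); [lra|field_simplify; lra]).
  nra. Qed.

Lemma has_cderiv_Cps : has_cderiv (fun t => Cps c (z t)) t0 (Cmul (Cps d (z t0)) (dz t0)).
Proof.
  assert (Hpartial : forall n x, Boule t0 (mkposreal r Hr) x ->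
    has_cderiv (fun t => Cps_partial c (z t) n) x
      (match n with O => CR 0 | S m => Cmul (Cps_partial d (z x) m) (dz x) end)).
  { intros n x Hx. unfold Boule in Hx; simpl in Hx. destruct n.
    - exact (has_cderiv_const (CR (c O)) x).
    - apply has_cderiv_Cps_partial; auto. apply Hz; auto. }
  assert (Ht0 : Boule t0 (mkposreal r Hr) t0) by (unfold Boule; simpl; rewrite Rminus_diag, Rabs_R0; auto).
  split.
  - apply (CVU_derivable (fun n t => Re (Cps_partial c (z t) n))
      (fun n t => match n with O => 0 | S m => Re (Cmul (Cps_partial d (z t) m) (dz t)) end)
      (fun t => Re (Cps c (z t))) (fun t => Re (Cmul (Cps d (z t)) (dz t))) t0 (mkposreal r Hr)); auto.
    + apply Cps_partial_deriv_CVU; [apply Re_le_Cnorm|apply Re_sub].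
    + intros x Hx. exact (proj1 (Cps_partial_cv c (z x) Hc)).
    + intros n x Hx. destruct (Hpartial n x Hx) as [H _]. destruct n; exact H.
  - apply (CVU_derivable (fun n t => Im (Cps_partial c (z t) n))
      (fun n t => match n with O => 0 | S m => Im (Cmul (Cps_partial d (z t) m) (dz t)) end)
      (fun t => Im (Cps c (z t))) (fun t => Im (Cmul (Cps d (z t)) (dz t))) t0 (mkposreal r Hr)); auto.
    + apply Cps_partial_deriv_CVU; [apply Im_le_Cnorm|apply Im_sub].
    + intros x Hx. exact (proj2 (Cps_partial_cv c (z x) Hc)).
    + intros n x Hx. destruct (Hpartial n x Hx) as [_ H]. destruct n; exact H.
Qed.

End TermwiseDerivative.

Lemma exp_le x y : x <= y -> exp x <= exp y.
Proof. intros [H|H]. left; apply exp_increasing; auto. subst; lra. Qed.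

(* [exprel z = (e^z - 1)/z] and [Ei0' = exprel], by [Ei0_coef_succ]. *)
Definition exp_coef k := / INR (fact k).
Definition exprel_coef k := / INR (fact (S k)).
Definition Ei0_coef k := match k with O => 0 | S _ => / (INR k * INR (fact k)) end.

Lemma inv_fact_le k m : (k <= m)%nat -> / INR (fact m) <= / INR (fact k).
Proof. intro H. apply Rinv_le_contravar. apply fact_pos. apply le_INR. apply fact_le; auto. Qed.

Lemma exp_coef_bounded : coef_bounded exp_coef.
Proof. intro k. unfold exp_coef. rewrite Rabs_right. lra. left; apply Rinv_0_lt_compat, fact_pos. Qed.
Lemma exprel_coef_bounded : coef_bounded exprel_coef.
Proof. intro k. unfold exprel_coef. rewrite Rabs_right. apply inv_fact_le; lia.
  left; apply Rinv_0_lt_compat, fact_pos. Qed.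
Lemma Ei0_coef_bounded : coef_bounded Ei0_coef.
Proof. intro k. destruct k; unfold Ei0_coef. rewrite Rabs_R0. left; apply Rinv_0_lt_compat, fact_pos.
  pose proof (fact_pos (S k)). assert (1 <= INR (S k)) by (apply (le_INR 1); lia).
  rewrite Rabs_right. apply Rinv_le_contravar; nra. left; apply Rinv_0_lt_compat; nra. Qed.
Lemma exp_coef_succ k : exp_coef k = INR (S k) * exp_coef (S k).
Proof. unfold exp_coef. change (fact (S k)) with (S k * fact k)%nat. rewrite mult_INR.
  pose proof (fact_pos k). pose proof (lt_0_INR (S k) ltac:(lia)). field; lra. Qed.
Lemma Ei0_coef_succ k : exprel_coef k = INR (S k) * Ei0_coef (S k).
Proof. unfold exprel_coef, Ei0_coef. pose proof (fact_pos (S k)). pose proof (lt_0_INR (S k) ltac:(lia)).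
  field; lra. Qed.

Lemma Ei0_Cps z : Ei0 z = Cps Ei0_coef z.
Proof. unfold Ei0. apply Clim_eq.
  apply (C_cv_ext (Cps_partial Ei0_coef z)); [|apply Cps_partial_cv, Ei0_coef_bounded].
  induction n. reflexivity. simpl. rewrite IHn. f_equal. unfold Cdiv.
  pose proof (fact_pos (S n)). pose proof (lt_0_INR (S n) ltac:(lia)).
  rewrite Cinv_CR by (apply Rgt_not_eq, Rmult_lt_0_compat; auto). unfold Ei0_coef. ceq; ring. Qed.

Lemma Ei0_0 : Ei0 (CR 0) = CR 0.
Proof. rewrite Ei0_Cps, Cps_0. reflexivity. apply Ei0_coef_bounded. Qed.
Lemma Im_Ei0_real x : Im (Ei0 (CR x)) = 0.
Proof. rewrite Ei0_Cps. apply Im_Cps_real, Ei0_coef_bounded. Qed.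

Lemma Cps_exp_shift z : Cps exp_coef z = Cadd (CR 1) (Cmul z (Cps exprel_coef z)).
Proof. apply (C_cv_unique (fun n => Cps_partial exp_coef z (S n))).
  - destruct (Cps_partial_cv exp_coef z exp_coef_bounded) as [H1 H2].
    split; apply (Un_cv_succ (fun n => _ (Cps_partial exp_coef z n))); auto.
  - apply (C_cv_ext (fun n => Cadd (CR 1) (Cmul z (Cps_partial exprel_coef z n)))).
    + induction n. simpl. unfold exprel_coef, exp_coef. simpl. ceq; field.
      change (Cps_partial exp_coef z (S (S n))) with
        (Cadd (Cps_partial exp_coef z (S n)) (Cmul (CR (exp_coef (S (S n)))) (Cpow z (S (S n))))).
      rewrite <- IHn. simpl Cps_partial. simpl Cpow. unfold exprel_coef, exp_coef. ceq; ring.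
    + destruct (Cps_partial_cv exprel_coef z exprel_coef_bounded) as [H1 H2]. split; csimpl.
      * apply CV_plus. apply Un_cv_const. apply CV_minus; apply CV_mult; auto; apply Un_cv_const.
      * apply CV_plus. apply Un_cv_const. apply CV_plus; apply CV_mult; auto; apply Un_cv_const. Qed.

Lemma Cnorm_linear_le w t0 t : Rabs (t - t0) < 1 ->
  Cnorm (Cmul w (CR t)) <= Cnorm w * (Rabs t0 + 2) /\ Cnorm w <= Cnorm w * (Rabs t0 + 2).
Proof. intro H. rewrite Cnorm_mulCR. pose proof (Cnorm_ge0 w). pose proof (Rabs_pos t0).
  split. apply Rmult_le_compat_l; auto. pose proof (Rabs_triang_inv t t0). lra. nra. Qed.

Lemma has_cderiv_Cps_linear c d w t0 : coef_bounded c -> coef_bounded d ->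
  (forall k, d k = INR (S k) * c (S k)) ->
  has_cderiv (fun t => Cps c (Cmul w (CR t))) t0 (Cmul (Cps d (Cmul w (CR t0))) w).
Proof. intros. apply (has_cderiv_Cps c d (fun t => Cmul w (CR t)) (fun _ => w) t0 1 (Cnorm w * (Rabs t0 + 2)));
  auto; [lra|]. intros t Ht. split. apply has_cderiv_linear. apply Cnorm_linear_le; auto. Qed.

(* [t |-> Cps exp_coef (t w) * Cexp (- t w)] has zero derivative. *)
Lemma Cps_exp w : Cps exp_coef w = Cexp w.
Proof. set (g := fun t => Cmul (Cps exp_coef (Cmul w (CR t))) (Cexp (Copp (Cmul w (CR t))))).
  assert (g 1 = g 0).
  { apply Cconst_of_deriv0. lra. intros x Hx. unfold g. eapply has_cderiv_eq. apply has_cderiv_mul.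
    - apply (has_cderiv_Cps_linear exp_coef exp_coef); auto using exp_coef_bounded, exp_coef_succ.
    - apply has_cderiv_Cexp, has_cderiv_opp, has_cderiv_linear.
    - ceq; ring. }
  unfold g in H. replace (Cmul w (CR 0)) with (CR 0) in H by (ceq; ring).
  rewrite Cps_0 in H by apply exp_coef_bounded. replace (Copp (CR 0)) with (CR 0) in H by (ceq; ring).
  rewrite Cexp_0 in H. replace (Cmul w (CR 1)) with w in H by (ceq; ring).
  transitivity (Cmul (Cmul (Cps exp_coef w) (Cexp (Copp w))) (Cexp w)).
  - replace (Cmul (Cmul (Cps exp_coef w) (Cexp (Copp w))) (Cexp w)) with
      (Cmul (Cps exp_coef w) (Cmul (Cexp w) (Cexp (Copp w)))) by (ceq; ring).
    rewrite Cexp_opp. ceq; ring.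
  - rewrite H. unfold exp_coef. simpl. ceq; field. Qed.

Lemma Cexp_exprel z : Cadd (CR 1) (Cmul z (Cps exprel_coef z)) = Cexp z.
Proof. rewrite <- Cps_exp, Cps_exp_shift. auto. Qed.

Lemma has_cderiv_Ei0 z dz t0 r M : 0 < r ->
  (forall t, Rabs (t - t0) < r -> has_cderiv z t (dz t) /\ Cnorm (z t) <= M /\ Cnorm (dz t) <= M) ->
  has_cderiv (fun t => Ei0 (z t)) t0 (Cmul (Cps exprel_coef (z t0)) (dz t0)).
Proof. intros. apply (has_cderiv_ext (fun t => Cps Ei0_coef (z t))). intro; rewrite Ei0_Cps; auto.
  apply (has_cderiv_Cps Ei0_coef exprel_coef z dz t0 r M);
    auto using Ei0_coef_bounded, exprel_coef_bounded, Ei0_coef_succ. Qed.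

Lemma Rmax0_mul_le a x t : 0 <= x <= t -> Rmax 0 (a * x) <= Rmax 0 a * t.
Proof. intro H. unfold Rmax. destruct (Rle_dec 0 (a*x)); destruct (Rle_dec 0 a); nra. Qed.
Lemma Rmax0_Re_le b : Rmax 0 (Re b) <= Cnorm b.
Proof. pose proof (Re_le_Cnorm b). pose proof (Rle_abs (Re b)). pose proof (Cnorm_ge0 b).
  unfold Rmax; destruct (Rle_dec 0 (Re b)); lra. Qed.

Lemma Cexp_sub1_le w : Cnorm (Csub (Cexp w) (CR 1)) <= Cnorm w * exp (Rmax 0 (Re w)).
Proof. set (m := Cnorm w * exp (Rmax 0 (Re w))).
  assert (Cnorm (Csub (Cexp (Cmul w (CR 1))) (Cexp (Cmul w (CR 0)))) <= m * 1 - m * 0).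
  { apply (Cnorm_increment_le (fun s => Cexp (Cmul w (CR s))) (fun s => Cmul (Cexp (Cmul w (CR s))) w)
      (fun s => m * s) (fun _ => m)); [lra| | |].
    - intros; apply has_cderiv_Cexp, has_cderiv_linear.
    - intros. eapply has_deriv_eq. apply has_deriv_scal, has_deriv_id. ring.
    - intros x Hx. rewrite Cnorm_mul, Cnorm_Cexp. unfold m. rewrite Rmult_comm.
      apply Rmult_le_compat_l. apply Cnorm_ge0. apply exp_le. rewrite Re_mul, Re_CR, Im_CR.
      replace (Re w * x - Im w * 0) with (Re w * x) by ring. apply (Rmax0_mul_le (Re w) x 1) in Hx. pose proof (Rmax_r 0 (Re w * x)). lra. }
  replace (Cmul w (CR 1)) with w in H by (ceq; ring). replace (Cmul w (CR 0)) with (CR 0) in H by (ceq; ring).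
  rewrite Cexp_0 in H. lra. Qed.

Lemma Cnorm_exprel_le w : Cnorm (Cps exprel_coef w) <= exp (Rmax 0 (Re w)).
Proof. destruct (Req_dec (Cnorm w) 0) as [H|H].
  - apply Cnorm_eq0 in H. subst. rewrite Cps_0 by apply exprel_coef_bounded.
    replace (exprel_coef 0) with 1 by (unfold exprel_coef; simpl; field).
    rewrite Cnorm_CR, Rabs_R1. rewrite Re_CR, Rmax_left by lra. rewrite exp_0. lra.
  - pose proof (Cexp_sub1_le w). rewrite <- Cexp_exprel in H0.
    replace (Csub (Cadd (CR 1) (Cmul w (Cps exprel_coef w))) (CR 1)) with (Cmul w (Cps exprel_coef w)) in H0
      by (ceq; ring).
    rewrite Cnorm_mul in H0. pose proof (Cnorm_ge0 w). apply Rmult_le_reg_l with (Cnorm w); lra. Qed.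

Lemma Cnorm_Ei0_le b t : 0 <= t -> Cnorm (Ei0 (Cmul b (CR t))) <= Cnorm b * t * exp (Rmax 0 (Re b) * t).
Proof. intro Ht. set (m := Cnorm b * exp (Rmax 0 (Re b) * t)).
  assert (Cnorm (Csub (Ei0 (Cmul b (CR t))) (Ei0 (Cmul b (CR 0)))) <= m * t - m * 0).
  { apply (Cnorm_increment_le (fun s => Ei0 (Cmul b (CR s))) (fun s => Cmul (Cps exprel_coef (Cmul b (CR s))) b)
      (fun s => m * s) (fun _ => m)); auto.
    - intros x Hx. apply (has_cderiv_Ei0 (fun s => Cmul b (CR s)) (fun _ => b) x 1 (Cnorm b * (Rabs x + 2))).
      lra. intros; split. apply has_cderiv_linear. apply Cnorm_linear_le; auto.
    - intros. eapply has_deriv_eq. apply has_deriv_scal, has_deriv_id. ring.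
    - intros x Hx. rewrite Cnorm_mul. unfold m. rewrite Rmult_comm. apply Rmult_le_compat_l. apply Cnorm_ge0.
      eapply Rle_trans. apply Cnorm_exprel_le. apply exp_le. rewrite Re_mul, Re_CR, Im_CR.
      replace (Re b * x - Im b * 0) with (Re b * x) by ring. apply Rmax0_mul_le; lra. }
  replace (Cmul b (CR 0)) with (CR 0) in H by (ceq; ring). rewrite Ei0_0 in H.
  replace (Csub (Ei0 (Cmul b (CR t))) (CR 0)) with (Ei0 (Cmul b (CR t))) in H by (ceq; ring).
  unfold m in H. lra. Qed.

Lemma Cnorm_Ei0_small b t : 0 <= t <= 1 -> Cnorm (Ei0 (Cmul b (CR t))) <= Cnorm b * exp (Cnorm b) * t.
Proof. intro H. eapply Rle_trans. apply Cnorm_Ei0_le; lra.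
  replace (Cnorm b * t * exp (Rmax 0 (Re b) * t)) with (Cnorm b * exp (Rmax 0 (Re b) * t) * t) by ring.
  apply Rmult_le_compat_r. lra. apply Rmult_le_compat_l. apply Cnorm_ge0. apply exp_le.
  pose proof (Rmax0_Re_le b). pose proof (Rmax_l 0 (Re b)). nra. Qed.

(** * Euler's constant as [lim (- Ei0 (-T) - ln T)] *)

Definition Ei0_neg (u : R) : R := Re (Ei0 (CR (- u))).
Definition exprel_neg (u : R) : R := Re (Cps exprel_coef (CR (- u))).

Lemma has_deriv_Ei0_neg u : has_deriv Ei0_neg u (- exprel_neg u).
Proof. destruct (has_cderiv_Ei0 (fun s => CR (- s)) (fun _ => CR (-1)) u 1 (Rabs u + 2)) as [H _]; [lra| |].
  - intros t Ht. split.
    + apply has_cderiv_CR. eapply has_deriv_eq. apply has_deriv_opp, has_deriv_id. auto.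
    + rewrite !Cnorm_CR, Rabs_Ropp, Rabs_m1. pose proof (Rabs_triang_inv t u). pose proof (Rabs_pos u). lra.
  - unfold Ei0_neg, exprel_neg. eapply has_deriv_eq. exact H. csimpl. ring. Qed.

Lemma Ei0_neg_0 : Ei0_neg 0 = 0.
Proof. unfold Ei0_neg. rewrite Ropp_0, Ei0_0. reflexivity. Qed.
Lemma exprel_neg_0 : exprel_neg 0 = 1.
Proof. unfold exprel_neg. rewrite Ropp_0, Cps_0 by apply exprel_coef_bounded.
  unfold exprel_coef; simpl. csimpl. field. Qed.
Lemma exprel_neg_pos u : 0 < u -> exprel_neg u = (1 - exp (- u)) / u.
Proof. intro H. assert (1 + (- u) * exprel_neg u = exp (- u)).
  { pose proof (Cexp_exprel (CR (- u))). apply (f_equal Re) in H0. unfold exprel_neg.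
    unfold Cexp in H0. csimpl. rewrite cos_0 in H0. rewrite <- (Rmult_1_r (exp (-u))), <- H0. ring. }
  field_simplify_eq; lra. Qed.

Lemma exp_INR_mult a n : exp (INR n * a) = exp a ^ n.
Proof. induction n. simpl. rewrite Rmult_0_l, exp_0. reflexivity.
  rewrite S_INR, Rmult_plus_distr_r, exp_plus, IHn, Rmult_1_l, <- tech_pow_Rmult. apply Rmult_comm. Qed.

Lemma Bernoulli_ineq x n : -1 <= x -> 1 + INR n * x <= (1 + x) ^ n.
Proof. intro H. induction n. simpl; lra. rewrite S_INR. simpl.
  assert (0 <= 1 + x) by lra. assert (0 <= INR n) by apply pos_INR.
  assert (0 <= INR n * (x * x)) by (apply Rmult_le_pos; nra).
  assert ((1+x)*(1 + INR n * x) <= (1+x)*(1+x)^n) by (apply Rmult_le_compat_l; lra).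
  nra. Qed.

(* With [v = u/n]: [(1 - v)^n <= e^{-u}], and [(1 + v)^n (1 - v)^n = (1 - v^2)^n >= 1 - n v^2]
   with [(1 + v)^n <= e^u]. *)
Lemma exp_sub_pow_le u n : (1 <= n)%nat -> 0 <= u <= INR n ->
  0 <= exp (- u) - (1 - u / INR n) ^ n <= u * u * exp (- u) / INR n.
Proof. intros Hn Hu. assert (HN : 1 <= INR n) by (apply (le_INR 1); auto).
  set (N := INR n) in *. set (v := u / N).
  assert (Hv : u = N * v) by (unfold v; field; lra).
  assert (Hv0 : 0 <= v <= 1).
  { split. unfold v. apply Rmult_le_pos; [lra|]. left; apply Rinv_0_lt_compat; lra.
    apply Rmult_le_reg_l with N. lra. rewrite <- Hv. lra. }
  assert (He : exp (- u) = exp (- v) ^ n) by (rewrite <- exp_INR_mult; f_equal; unfold N in Hv; rewrite Hv; ring).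
  assert (He2 : exp u = exp v ^ n) by (rewrite <- exp_INR_mult; f_equal; unfold N in Hv; rewrite Hv; ring).
  assert (E1 : 1 - v <= exp (- v)) by (pose proof (exp_ineq1_le (-v)); lra).
  assert (E2 : 1 + v <= exp v) by (apply exp_ineq1_le).
  split.
  - rewrite He. assert ((1-v)^n <= exp (-v) ^ n) by (apply pow_incr; lra). lra.
  - assert (B1 : (1 + v) ^ n <= exp u) by (rewrite He2; apply pow_incr; lra).
    assert (B2 : 1 + N * (- (v*v)) <= (1 + - (v*v)) ^ n) by (apply Bernoulli_ineq; nra).
    assert (B3 : (1 + - (v*v)) ^ n = (1+v)^n * (1-v)^n) by (rewrite <- Rpow_mult_distr; f_equal; ring).
    assert (B4 : 0 <= (1-v)^n) by (apply pow_le; lra).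
    assert (B5 : 1 - N * (v * v) <= exp u * (1 - v)^n) by nra.
    assert (B6 : exp (-u) * exp u = 1) by (rewrite <- exp_plus; replace (-u+u) with 0 by ring; apply exp_0).
    assert (B7 : exp (-u) * (1 - N*(v*v)) <= (1-v)^n).
    { replace ((1-v)^n) with (exp (-u) * (exp u * (1-v)^n)) by (rewrite <- Rmult_assoc, B6; ring).
      apply Rmult_le_compat_l. left; apply exp_pos. auto. }
    replace (u * u * exp (- u) / N) with (exp (-u) * (N * (v*v))) by (rewrite Hv; field; lra).
    lra. Qed.

(* [log_partial m u] is the [N]-th partial sum of [- ln (u / N)], where [N = m + 1]. *)
Definition log_partial m u := sum_f_R0 (fun j => (1 - u / INR (S m)) ^ S j / INR (S j)) m.

Lemma has_deriv_sum (f : nat -> R -> R) df u k : (forall j, has_deriv (f j) u (df j)) ->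
  has_deriv (fun v => sum_f_R0 (fun j => f j v) k) u (sum_f_R0 df k).
Proof. intro H. induction k; simpl. apply H. apply has_deriv_plus; auto. Qed.

Lemma has_deriv_log_partial m u :
  has_deriv (log_partial m) u (- / INR (S m) * sum_f_R0 (fun j => (1 - u / INR (S m)) ^ j) m).
Proof. set (N := INR (S m)). assert (HN : 0 < N) by (apply lt_0_INR; lia).
  unfold log_partial. fold N. rewrite scal_sum.
  apply (has_deriv_sum (fun j v => (1 - v / N) ^ S j / INR (S j))). intro j.
  apply (has_deriv_ext (fun v => / INR (S j) * (1 - v / N) ^ S j)); [intro; unfold Rdiv; ring|].
  eapply has_deriv_eq. apply has_deriv_scal.
  apply (has_deriv_comp (fun x => x ^ S j) (fun v => 1 - v / N)).
  - apply (has_deriv_ext (fun v => 1 - / N * v)); [intro; unfold Rdiv; ring|].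
    apply has_deriv_minus. apply has_deriv_const. apply has_deriv_scal, has_deriv_id.
  - apply derivable_pt_lim_pow.
  - simpl pred. pose proof (lt_0_INR (S j) ltac:(lia)). field. split; lra. Qed.

Lemma log_partial_0 m : log_partial m 0 = sum_f_R0 (fun k => / INR (S k)) m.
Proof. unfold log_partial. apply sum_eq. intros.
  replace (1 - 0 / INR (S m)) with 1 by (field; apply not_0_INR; lia). rewrite pow1. unfold Rdiv; ring. Qed.
Lemma log_partial_N m : log_partial m (INR (S m)) = 0.
Proof. unfold log_partial. replace (1 - INR (S m) / INR (S m)) with 0 by (field; apply not_0_INR; lia).
  rewrite (sum_eq _ (fun _ => 0)) by (intros; simpl; unfold Rdiv; ring). rewrite sum_cte. ring. Qed.

Lemma deriv_Ei0_neg_log_partial_le m u : 0 <= u <= INR (S m) ->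
  Rabs (exprel_neg u - / INR (S m) * sum_f_R0 (fun j => (1 - u / INR (S m)) ^ j) m)
    <= u * exp (- u) / INR (S m).
Proof. intro Hu. set (N := INR (S m)) in *. assert (HN : 1 <= N) by (apply (le_INR 1); lia).
  destruct (Req_dec u 0) as [H0|H0].
  - subst u. rewrite exprel_neg_0. replace (1 - 0 / N) with 1 by (field; lra).
    rewrite (sum_eq _ (fun _ => 1)) by (intros; apply pow1). rewrite sum_cte. unfold N. rewrite S_INR.
    replace (1 - / (INR m + 1) * (1 * (INR m + 1))) with 0 by (field; pose proof (pos_INR m); lra).
    rewrite Rabs_R0, Rmult_0_l. unfold Rdiv. lra.
  - assert (Hup : 0 < u) by lra. rewrite exprel_neg_pos by auto.
    rewrite tech3.
    2: { intro h. apply H0. apply Rmult_eq_reg_r with (/N); [|apply Rgt_not_eq, Rinv_0_lt_compat; lra].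
         fold (u / N). lra. }
    replace ((1 - exp (- u)) / u - / N * ((1 - (1 - u / N) ^ S m) / (1 - (1 - u / N)))) with
      (- (exp (-u) - (1 - u/N) ^ S m) / u) by (field; lra).
    pose proof (exp_sub_pow_le u (S m) ltac:(lia) Hu). fold N in H.
    rewrite Rabs_div, Rabs_Ropp, (Rabs_right u), Rabs_right by lra.
    apply Rmult_le_reg_r with u; auto.
    replace ((exp (- u) - (1 - u / N) ^ S m) / u * u) with (exp (- u) - (1 - u / N) ^ S m) by (field; lra).
    replace (u * exp (- u) / N * u) with (u * u * exp (- u) / N) by (field; lra). lra. Qed.

(* [u |-> - Ei0 (-u) + log_partial m u] has derivative at most [u e^{-u} / N] on [0, N],
   and [u e^{-u}] integrates to at most 1. *)
Lemma Ei0_neg_harmonic_le m :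
  Rabs (- Ei0_neg (INR (S m)) - sum_f_R0 (fun k => / INR (S k)) m) <= / INR (S m).
Proof. set (N := INR (S m)). assert (HN : 1 <= N) by (apply (le_INR 1); lia).
  set (K := fun u => (1 - (1 + u) * exp (- u)) / N).
  assert (Rabs ((- Ei0_neg N + log_partial m N) - (- Ei0_neg 0 + log_partial m 0)) <= K N - K 0).
  { apply (Rabs_increment_le (fun u => - Ei0_neg u + log_partial m u)
      (fun u => exprel_neg u - / N * sum_f_R0 (fun j => (1 - u / N) ^ j) m) K (fun u => u * exp (- u) / N)).
    - lra.
    - intros x Hx. eapply has_deriv_eq. apply has_deriv_plus. apply has_deriv_opp, has_deriv_Ei0_neg.
      apply has_deriv_log_partial. fold N. ring.
    - intros x Hx. unfold K, Rdiv. eapply has_deriv_eq.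
      + apply (has_deriv_ext (fun u => / N * (1 - (1 + u) * exp (- u)))); [intro; ring|].
        apply has_deriv_scal. apply has_deriv_minus. apply has_deriv_const. apply has_deriv_mult.
        apply has_deriv_plus. apply has_deriv_const. apply has_deriv_id.
        apply has_deriv_exp. apply has_deriv_opp, has_deriv_id.
      + cbv beta; ring.
    - intros x Hx. apply deriv_Ei0_neg_log_partial_le. auto. }
  rewrite log_partial_N, log_partial_0, Ei0_neg_0 in H.
  replace (- Ei0_neg N + 0 - (- 0 + sum_f_R0 (fun k => / INR (S k)) m))
    with (- Ei0_neg N - sum_f_R0 (fun k => / INR (S k)) m) in H by ring.
  eapply Rle_trans. apply H. unfold K.
  replace (1 - (1 + 0) * exp (- 0)) with 0 by (rewrite Ropp_0, exp_0; ring).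
  assert (0 < (1 + N) * exp (- N)) by (apply Rmult_lt_0_compat; [lra|apply exp_pos]).
  unfold Rdiv. rewrite Rmult_0_l, Rminus_0_r. rewrite <- (Rmult_1_l (/ N)) at 2.
  apply Rmult_le_compat_r. left; apply Rinv_0_lt_compat; lra. lra. Qed.

Definition gamma_approx T := - Ei0_neg T - ln T.

Lemma has_deriv_gamma_approx T : 0 < T -> has_deriv gamma_approx T (- exp (- T) / T).
Proof. intro H. unfold gamma_approx. eapply has_deriv_eq. apply has_deriv_minus.
  apply has_deriv_opp, has_deriv_Ei0_neg. apply derivable_pt_lim_ln; auto.
  rewrite exprel_neg_pos by auto. field; lra. Qed.

Lemma gamma_approx_decreasing a b : 0 < a -> a <= b -> gamma_approx b <= gamma_approx a.
Proof. intros Ha Hab. assert (- gamma_approx a <= - gamma_approx b); [|lra].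
  apply (nondecreasing_of_deriv_nonneg (fun x => - gamma_approx x) (fun x => exp (- x) / x)); auto.
  - intros. eapply has_deriv_eq. apply has_deriv_opp, has_deriv_gamma_approx. lra. field; lra.
  - intros. apply Rlt_le, Rdiv_lt_0_compat. apply exp_pos. lra. Qed.

Lemma gamma_approx_lower T : 1 <= T -> gamma_approx 1 - 1 <= gamma_approx T.
Proof. intro H. assert (gamma_approx 1 - exp (- 1) <= gamma_approx T - exp (- T)).
  { apply (nondecreasing_of_deriv_nonneg (fun x => gamma_approx x - exp (- x))
      (fun x => - exp (- x) / x + exp (- x))); auto.
    - intros. eapply has_deriv_eq. apply has_deriv_minus. apply has_deriv_gamma_approx. lra.
      apply has_deriv_exp, has_deriv_opp, has_deriv_id. ring.
    - intros. assert (0 < exp (- x)) by apply exp_pos.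
      assert (exp (- x) / x <= exp (- x)); [|lra]. unfold Rdiv.
      rewrite <- (Rmult_1_r (exp (- x))) at 2. apply Rmult_le_compat_l. lra.
      rewrite <- Rinv_1. apply Rinv_le_contravar; lra. }
  pose proof (exp_pos (- T)). assert (exp (-1) <= 1) by (rewrite <- exp_0; apply exp_le; lra). lra. Qed.

Lemma gamma_approx_cv : { g | Un_cv (fun m => gamma_approx (INR (S m))) g }.
Proof. destruct (growing_cv (fun m => - gamma_approx (INR (S m)))) as [l Hl].
  - intro n. assert (gamma_approx (INR (S (S n))) <= gamma_approx (INR (S n))); [|lra].
    apply gamma_approx_decreasing. apply lt_0_INR; lia. apply le_INR; lia.
  - exists (1 - gamma_approx 1). intros x [n Hn]. subst.
    assert (gamma_approx 1 - 1 <= gamma_approx (INR (S n))); [|lra].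
    apply gamma_approx_lower. apply (le_INR 1); lia.
  - exists (- l). apply (Un_cv_ext (fun m => -1 * (- gamma_approx (INR (S m))))); [intro; ring|].
    replace (-l) with (-1 * l) by ring. apply CV_mult. apply Un_cv_const. auto. Qed.

Lemma euler_gamma_eq : Un_cv (fun m => gamma_approx (INR (S m))) euler_gamma.
Proof. destruct gamma_approx_cv as [g Hg].
  assert (Hs : Un_cv (fun n => sum_f_R0 (fun k => / INR (S k)) n - ln (INR (S n))) g).
  { intros e He. destruct (Hg (e/2)) as [N1 HN1]; [lra|].
    destruct (INR_unbounded (2 / e)) as [N2 HN2].
    exists (N1 + N2)%nat. intros n Hn. specialize (HN1 n ltac:(lia)). pose proof (Ei0_neg_harmonic_le n).
    unfold gamma_approx in HN1. unfold Rdist in *.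
    assert (/ INR (S n) < e / 2).
    { assert (INR N2 <= INR (S n)) by (apply le_INR; lia). assert (0 < INR (S n)) by (apply lt_0_INR; lia).
      assert (0 < 2 / e) by (apply Rdiv_lt_0_compat; lra).
      replace (e / 2) with (/ (2 / e)) by (field; lra). apply Rinv_lt_contravar; nra. }
    replace (sum_f_R0 (fun k : nat => / INR (S k)) n - ln (INR (S n)) - g) with
      ((- Ei0_neg (INR (S n)) - ln (INR (S n)) - g)
       - (- Ei0_neg (INR (S n)) - sum_f_R0 (fun k : nat => / INR (S k)) n)) by ring.
    eapply Rle_lt_trans. apply Rabs_triang. rewrite Rabs_Ropp. lra. }
  replace euler_gamma with g; auto.
  unfold euler_gamma. apply (UL_sequence (fun n => sum_f_R0 (fun k => / INR (S k)) n - ln (INR (S n)))); auto.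
  apply (epsilon_spec (inhabits 0)
    (fun g => Un_cv (fun n => sum_f_R0 (fun k => / INR (S k)) n - ln (INR (S n))) g)).
  exists g; auto. Qed.

Lemma gamma_Ei0_limit e : 0 < e ->
  exists M, forall T, M < T -> Rabs (euler_gamma + ln T + Ei0_neg T) < e.
Proof. intro He. destruct (euler_gamma_eq e He) as [N HN]. exists (INR (S N)). intros T HT.
  assert (Hup : gamma_approx T <= gamma_approx (INR (S N))).
  { apply gamma_approx_decreasing; [apply lt_0_INR; lia|lra]. }
  assert (Hlow : euler_gamma <= gamma_approx T).
  { destruct (INR_unbounded T) as [M HM].
    apply Rle_cv_lim with (Un := fun k => gamma_approx (INR (S (k + M)))) (Vn := fun _ => gamma_approx T).
    - intro k. pose proof (lt_0_INR (S N) ltac:(lia)). apply gamma_approx_decreasing. lra.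
      assert (INR M <= INR (S (k + M))) by (apply le_INR; lia). lra.
    - apply (CV_shift' (fun m => gamma_approx (INR (S m)))). apply euler_gamma_eq.
    - apply Un_cv_const. }
  specialize (HN N ltac:(lia)). unfold Rdist in HN. apply Rabs_def2 in HN.
  replace (euler_gamma + ln T + Ei0_neg T) with (- (gamma_approx T - euler_gamma)) by (unfold gamma_approx; ring).
  rewrite Rabs_Ropp, Rabs_right; lra. Qed.

Definition near1 (P : R -> Prop) := exists d, 0 < d /\ forall x, 1 < x < 1 + d -> P x.
Definition near_infty (P : R -> Prop) := exists M, forall x, M < x -> P x.
Definition tends (E : (R -> Prop) -> Prop) (g : R -> Cplx) l :=
  forall e, 0 < e -> E (fun x => Cnorm (Csub (g x) l) < e).

Definition is_filter (E : (R -> Prop) -> Prop) :=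
  E (fun _ => True) /\
  (forall P Q : R -> Prop, E P -> E Q -> E (fun x => P x /\ Q x)) /\
  (forall P Q : R -> Prop, (forall x, P x -> Q x) -> E P -> E Q).

Lemma near1_filter : is_filter near1.
Proof. split; [|split].
  - exists 1. split; auto; lra.
  - intros P Q [d1 [H1 HP]] [d2 [H2 HQ]]. exists (Rmin d1 d2). split. apply Rmin_pos; auto.
    intros x Hx. pose proof (Rmin_l d1 d2). pose proof (Rmin_r d1 d2). split; [apply HP|apply HQ]; lra.
  - intros P Q H [d [Hd HP]]. exists d. split; auto. Qed.
Lemma near_infty_filter : is_filter near_infty.
Proof. split; [|split].
  - exists 0. auto.
  - intros P Q [M1 HP] [M2 HQ]. exists (Rmax M1 M2). intros x Hx.
    pose proof (Rmax_l M1 M2). pose proof (Rmax_r M1 M2). split; [apply HP|apply HQ]; lra.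
  - intros P Q H [M HP]. exists M. auto. Qed.

Section Tends.
Variable E : (R -> Prop) -> Prop.
Hypothesis HE : is_filter E.

Lemma tends_const c : tends E (fun _ => c) c.
Proof. intros e He. destruct HE as [Ht [_ Hm]]. apply (Hm (fun _ => True)); auto.
  intros. replace (Csub c c) with (CR 0) by (ceq; ring). rewrite Cnorm_CR, Rabs_R0; auto. Qed.

Lemma tends_of_le g l (B : R -> R) : (forall e, 0 < e -> E (fun x => B x < e)) ->
  E (fun x => Cnorm (Csub (g x) l) <= B x) -> tends E g l.
Proof. intros HB Hg e He. destruct HE as [_ [Ha Hm]].
  apply (Hm (fun x => B x < e /\ Cnorm (Csub (g x) l) <= B x)). intros x [h1 h2]; lra. apply Ha; auto. Qed.

Lemma tends_add g1 g2 l1 l2 : tends E g1 l1 -> tends E g2 l2 ->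
  tends E (fun x => Cadd (g1 x) (g2 x)) (Cadd l1 l2).
Proof. intros H1 H2 e He. destruct HE as [_ [Ha Hm]].
  apply (Hm (fun x => Cnorm (Csub (g1 x) l1) < e/2 /\ Cnorm (Csub (g2 x) l2) < e/2)).
  - intros x [a b]. replace (Csub (Cadd (g1 x) (g2 x)) (Cadd l1 l2))
      with (Cadd (Csub (g1 x) l1) (Csub (g2 x) l2)) by (ceq; ring).
    eapply Rle_lt_trans. apply Cnorm_add. lra.
  - apply Ha; [apply H1|apply H2]; lra. Qed.

Lemma tends_opp g l : tends E g l -> tends E (fun x => Copp (g x)) (Copp l).
Proof. intros H e He. destruct HE as [_ [_ Hm]]. apply (Hm (fun x => Cnorm (Csub (g x) l) < e)); auto.
  intros x Hx. replace (Csub (Copp (g x)) (Copp l)) with (Copp (Csub (g x) l)) by (ceq; ring).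
  rewrite Cnorm_opp; auto. Qed.

Lemma tends_sub g1 g2 l1 l2 : tends E g1 l1 -> tends E g2 l2 ->
  tends E (fun x => Csub (g1 x) (g2 x)) (Csub l1 l2).
Proof. intros. apply tends_add; auto. apply tends_opp; auto. Qed.

Lemma tends_mul g1 g2 l1 l2 : tends E g1 l1 -> tends E g2 l2 ->
  tends E (fun x => Cmul (g1 x) (g2 x)) (Cmul l1 l2).
Proof. intros H1 H2 e He. destruct HE as [_ [Ha Hm]].
  set (a := Cnorm l1). set (b := Cnorm l2). assert (0 <= a) by apply Cnorm_ge0. assert (0 <= b) by apply Cnorm_ge0.
  set (e1 := e / (2 * (b + 1))). set (e2 := Rmin 1 (e / (2 * (a + 1)))).
  assert (He1 : 0 < e1) by (unfold e1; apply Rdiv_lt_0_compat; lra).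
  assert (He2 : 0 < e2) by (unfold e2; apply Rmin_pos; [lra|apply Rdiv_lt_0_compat; lra]).
  assert (He2r : e2 <= e / (2 * (a + 1))) by apply Rmin_r.
  assert (He21 : e2 <= 1) by apply Rmin_l.
  apply (Hm (fun x => Cnorm (Csub (g1 x) l1) < e1 /\ Cnorm (Csub (g2 x) l2) < e2));
    [|apply Ha; [apply H1|apply H2]; auto].
  intros x [h1 h2].
  replace (Csub (Cmul (g1 x) (g2 x)) (Cmul l1 l2))
    with (Cadd (Cmul (Csub (g1 x) l1) (g2 x)) (Cmul l1 (Csub (g2 x) l2))) by (ceq; ring).
  eapply Rle_lt_trans. apply Cnorm_add. rewrite !Cnorm_mul. fold a.
  assert (Cnorm (g2 x) <= b + 1).
  { replace (g2 x) with (Cadd (Csub (g2 x) l2) l2) by (ceq; ring). eapply Rle_trans. apply Cnorm_add. fold b. lra. }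
  assert (Cnorm (Csub (g1 x) l1) * Cnorm (g2 x) <= e1 * (b + 1))
    by (apply Rmult_le_compat; try apply Cnorm_ge0; lra).
  assert (a * Cnorm (Csub (g2 x) l2) <= a * (e / (2 * (a + 1)))) by (apply Rmult_le_compat_l; auto; lra).
  assert (e1 * (b+1) = e/2) by (unfold e1; field; lra).
  assert (a * (e / (2 * (a + 1))) < e / 2); [|lra].
  replace (a * (e / (2 * (a + 1)))) with ((e/2) * (a / (a+1))) by (field; lra).
  assert (a / (a+1) < 1) by (apply Rmult_lt_reg_r with (a+1); [lra|field_simplify; lra]). nra. Qed.

End Tends.

Lemma ln_pos x : 1 < x -> 0 < ln x.
Proof. intro H. rewrite <- ln_1. apply ln_increasing; lra. Qed.
Lemma ln_le_sub1 x : 0 < x -> ln x <= x - 1.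
Proof. intro H. pose proof (exp_ineq1_le (ln x)). rewrite exp_ln in H0 by auto. lra. Qed.
Lemma one_sub_inv_le_ln x : 0 < x -> 1 - / x <= ln x.
Proof. intro H. pose proof (ln_le_sub1 (/ x) ltac:(apply Rinv_0_lt_compat; auto)).
  rewrite ln_Rinv in H0 by auto. lra. Qed.
Lemma le_sqrt L : 0 <= L <= 1 -> L <= sqrt L.
Proof. intro H. rewrite <- (sqrt_pow2 L) at 1 by lra. apply sqrt_le_1_alt. nra. Qed.

Lemma near1_sqrt_ln_small C e : 0 < e -> near1 (fun x => C * sqrt (ln x) < e).
Proof. intro He. set (eta := e / (Rabs C + 1)).
  pose proof (Rabs_pos C). pose proof (Rle_abs C).
  assert (Heta : 0 < eta) by (unfold eta; apply Rdiv_lt_0_compat; lra).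
  set (m := Rmin 1 (eta * eta)). assert (Hm : 0 < m) by (unfold m; apply Rmin_pos; nra).
  pose proof (Rmin_r 1 (eta*eta)). fold m in H1.
  exists (exp m - 1). split. pose proof (exp_ineq1 m ltac:(lra)). lra.
  intros x Hx. assert (HL : 0 < ln x) by (apply ln_pos; lra).
  assert (ln x < m) by (rewrite <- (ln_exp m); apply ln_increasing; lra).
  assert (sqrt (ln x) < eta).
  { rewrite <- (sqrt_pow2 eta) by lra. apply sqrt_lt_1_alt. split; simpl; lra. }
  assert (0 <= sqrt (ln x)) by apply sqrt_pos.
  apply Rle_lt_trans with (Rabs C * eta). nra.
  unfold eta. apply Rmult_lt_reg_r with (Rabs C + 1). lra. field_simplify; lra. Qed.

Lemma near1_ln_le1 : near1 (fun x => ln x <= 1).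
Proof. exists (exp 1 - 1). split. pose proof (exp_ineq1 1 ltac:(lra)). lra.
  intros x Hx. left. rewrite <- (ln_exp 1). apply ln_increasing; lra. Qed.

Lemma tends_near1_of_sqrt_ln g l C :
  (forall x, 1 < x -> ln x <= 1 -> Cnorm (Csub (g x) l) <= C * sqrt (ln x)) -> tends near1 g l.
Proof. intro H. apply (tends_of_le near1 near1_filter g l (fun x => C * sqrt (ln x))).
  - intros. apply near1_sqrt_ln_small; auto.
  - destruct near1_ln_le1 as [d [Hd Hx]]. exists d. split; auto. intros x Hx'. apply H. lra. apply Hx; auto. Qed.

Lemma near_infty_ln_gt A : near_infty (fun x => A < ln x).
Proof. exists (exp A). intros x Hx. pose proof (exp_pos A).
  rewrite <- (ln_exp A). apply ln_increasing; lra. Qed.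

Lemma near_infty_exp_small C c e : 0 < c -> 0 < e -> near_infty (fun x => C * exp (- (c * ln x)) < e).
Proof. intros Hc He. pose proof (Rabs_pos C). pose proof (Rle_abs C).
  destruct (near_infty_ln_gt (ln ((Rabs C + 1) / e) / c)) as [M HM].
  exists (Rmax M 1). intros x Hx. specialize (HM x ltac:(pose proof (Rmax_l M 1); lra)).
  assert (Hx0 : 0 < ln x) by (apply ln_pos; pose proof (Rmax_r M 1); lra).
  assert (HE : exp (- (c * ln x)) < e / (Rabs C + 1)).
  { replace (e / (Rabs C + 1)) with (exp (- ln ((Rabs C + 1) / e))).
    - apply exp_increasing. apply Rmult_lt_compat_l with (r := c) in HM; auto.
      replace (c * (ln ((Rabs C + 1) / e) / c)) with (ln ((Rabs C + 1) / e)) in HM by (field; lra). lra.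
    - rewrite exp_Ropp, exp_ln by (apply Rdiv_lt_0_compat; lra). field. split; lra. }
  pose proof (exp_pos (- (c * ln x))).
  apply Rle_lt_trans with ((Rabs C + 1) * exp (- (c * ln x))). nra.
  apply Rlt_le_trans with ((Rabs C + 1) * (e / (Rabs C + 1))).
  - apply Rmult_lt_compat_l; lra.
  - right. field. lra. Qed.

(* [1 + L <= (1 + 2/kap) e^{kap L / 2}] trades the logarithmic factor for half the decay rate. *)
Lemma one_plus_mul_exp_le kap L : 0 < kap -> 0 <= L ->
  (1 + L) * exp (- (kap * L)) <= (1 + 2 / kap) * exp (- (kap * L / 2)).
Proof. intros Hk HL.
  assert (H1 : 1 + L <= (1 + 2 / kap) * exp (kap * L / 2)).
  { pose proof (exp_ineq1_le (kap * L / 2)). assert (1 <= exp (kap * L / 2)) by (rewrite <- exp_0; apply exp_le; nra).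
    assert (L <= 2 / kap * exp (kap * L / 2)).
    { replace L with (2 / kap * (kap * L / 2)) at 1 by (field; lra).
      apply Rmult_le_compat_l. left; apply Rdiv_lt_0_compat; lra. lra. }
    assert (0 < 2 / kap) by (apply Rdiv_lt_0_compat; lra). nra. }
  assert (H2 : exp (kap * L / 2) * exp (- (kap * L)) = exp (- (kap * L / 2)))
    by (rewrite <- exp_plus; f_equal; field; lra).
  rewrite <- H2, <- Rmult_assoc. apply Rmult_le_compat_r. left; apply exp_pos. auto. Qed.

Lemma near_infty_decay K kap e : 0 < kap -> 0 < e ->
  near_infty (fun x => K * (1 + ln x) * exp (- (kap * ln x)) < e).
Proof. intros Hk He. pose proof (Rabs_pos K). pose proof (Rle_abs K).
  assert (0 < 2 / kap) by (apply Rdiv_lt_0_compat; lra).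
  destruct (near_infty_exp_small (Rabs K * (1 + 2 / kap)) (kap / 2) e) as [M HM]; [lra|auto|].
  exists (Rmax M 1). intros x Hx. specialize (HM x ltac:(pose proof (Rmax_l M 1); lra)).
  assert (HL : 0 < ln x) by (apply ln_pos; pose proof (Rmax_r M 1); lra).
  pose proof (one_plus_mul_exp_le kap (ln x) Hk ltac:(lra)). pose proof (exp_pos (- (kap * ln x))).
  replace (- (kap / 2 * ln x)) with (- (kap * ln x / 2)) in HM by field.
  apply Rle_lt_trans with (Rabs K * ((1 + ln x) * exp (- (kap * ln x)))).
  - rewrite Rmult_assoc. apply Rmult_le_compat_r; nra.
  - eapply Rle_lt_trans; [|exact HM]. rewrite Rmult_assoc. apply Rmult_le_compat_l; auto. Qed.

Lemma tends_near_infty_of_decay g l K kap M0 : 0 < kap ->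
  (forall x, M0 < x -> Cnorm (Csub (g x) l) <= K * (1 + ln x) * exp (- (kap * ln x))) ->
  tends near_infty g l.
Proof. intros Hk H. apply (tends_of_le near_infty near_infty_filter g l
    (fun x => K * (1 + ln x) * exp (- (kap * ln x)))).
  - intros. apply near_infty_decay; auto.
  - exists M0. auto. Qed.

(** * [phi b x -> 0] as [x -> +oo] when [Re b < 0] *)

Lemma cos_le_of_Rabs_le phi th : Rabs phi <= Rabs th -> Rabs th < PI / 2 -> cos th <= cos phi.
Proof. intros H1 H2. assert (Hc : forall t, cos t = cos (Rabs t)).
  { intro t. unfold Rabs; destruct (Rcase_abs t); auto. rewrite cos_neg; auto. }
  rewrite (Hc th), (Hc phi). destruct (Req_dec (Rabs phi) (Rabs th)) as [E|E]; [rewrite E; lra|].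
  left. pose proof PI_RGT_0. pose proof (Rabs_pos phi). apply cos_decreasing_1; lra. Qed.

(* [neg_polar R phi = - R e^{i phi}]. [logEi0_polar R phi] is the part of [log z + Ei0 (- z)]
   at [z = R e^{i phi}] that depends on [phi]; its derivative [i e^{-z}] is exponentially
   small as long as [cos phi] stays away from 0. *)
Definition neg_polar R phi : Cplx := (- (R * cos phi), - (R * sin phi)).
Definition logEi0_polar R phi : Cplx := Cadd (0, phi) (Ei0 (neg_polar R phi)).

Lemma Cnorm_of_sq z R : 0 <= R -> Re z ^ 2 + Im z ^ 2 = R ^ 2 -> Cnorm z = R.
Proof. intros HR H. unfold Cnorm. rewrite H. apply sqrt_pow2; auto. Qed.

Lemma has_cderiv_logEi0_polar R phi : 0 <= R ->
  has_cderiv (logEi0_polar R) phi (Cmul (0,1) (Cexp (neg_polar R phi))).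
Proof. intro HR. unfold logEi0_polar. eapply has_cderiv_eq. apply has_cderiv_add.
  - instantiate (1 := (0,1)). split; unfold Re, Im; cbn [fst snd]. apply has_deriv_const. apply has_deriv_id.
  - apply (has_cderiv_Ei0 (neg_polar R) (fun t => (R * sin t, - (R * cos t))) phi 1 R); [lra|].
    intros t _. split; [split; unfold neg_polar, Re, Im; cbn [fst snd]|split].
    + eapply has_deriv_eq. apply has_deriv_opp, has_deriv_scal, (has_deriv_cos (fun t => t)), has_deriv_id.
      cbv beta; ring.
    + eapply has_deriv_eq. apply has_deriv_opp, has_deriv_scal, (has_deriv_sin (fun t => t)), has_deriv_id.
      cbv beta; ring.
    + right. apply Cnorm_of_sq; auto. unfold neg_polar, Re, Im; cbn [fst snd].
      pose proof (sin2_cos2 t). unfold Rsqr in H. nra.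
    + right. apply Cnorm_of_sq; auto. unfold Re, Im; cbn [fst snd].
      pose proof (sin2_cos2 t). unfold Rsqr in H. nra.
  - rewrite <- Cexp_exprel. unfold neg_polar. ceq; ring. Qed.

Lemma logEi0_polar_increment_le R th : 0 <= R -> Rabs th < PI / 2 ->
  Cnorm (Csub (logEi0_polar R th) (logEi0_polar R 0)) <= Rabs th * exp (- (R * cos th)).
Proof. intros HR Hth. set (c := exp (- (R * cos th))).
  assert (Hb : forall phi, Rabs phi <= Rabs th -> Cnorm (Cmul (0,1) (Cexp (neg_polar R phi))) <= c).
  { intros phi Hp. rewrite Cnorm_mul, Cnorm_Cexp.
    replace (Cnorm (0, 1)) with 1 by (unfold Cnorm, Re, Im; cbn [fst snd];
      replace (0 ^ 2 + 1 ^ 2) with 1 by ring; now rewrite sqrt_1).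
    unfold neg_polar, Re; cbn [fst]. rewrite Rmult_1_l.
    apply exp_le. assert (cos th <= cos phi) by (apply cos_le_of_Rabs_le; auto). nra. }
  assert (Hd : forall x, has_deriv (fun s => c * s) x c)
    by (intro; eapply has_deriv_eq; [apply has_deriv_scal, has_deriv_id|ring]).
  destruct (Rle_dec 0 th).
  - assert (Cnorm (Csub (logEi0_polar R th) (logEi0_polar R 0)) <= c * th - c * 0).
    { apply (Cnorm_increment_le (logEi0_polar R) (fun phi => Cmul (0,1) (Cexp (neg_polar R phi)))
        (fun s => c * s) (fun _ => c)); auto.
      - intros; apply has_cderiv_logEi0_polar; auto.
      - intros x Hx. apply Hb. rewrite !Rabs_right; lra. }
    rewrite Rabs_right by lra. unfold c in *. lra.
  - assert (Cnorm (Csub (logEi0_polar R 0) (logEi0_polar R th)) <= c * 0 - c * th).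
    { apply (Cnorm_increment_le (logEi0_polar R) (fun phi => Cmul (0,1) (Cexp (neg_polar R phi)))
        (fun s => c * s) (fun _ => c)); try lra; auto.
      - intros; apply has_cderiv_logEi0_polar; auto.
      - intros x Hx. apply Hb. rewrite !Rabs_left1; lra. }
    rewrite Cnorm_sub_sym, Rabs_left by lra. unfold c in *. lra. Qed.

Lemma polar_form b : 0 < Re b -> b = (Cnorm b * cos (Carg b), Cnorm b * sin (Carg b)).
Proof. intro H. assert (Hr : 0 < Cnorm b) by (pose proof (Re_le_Cnorm b); pose proof (Rle_abs (Re b)); lra).
  rewrite <- (Cexp_Clog b) at 1 by (intros [_ h]; lra).
  unfold Cexp, Clog. csimpl. rewrite exp_ln by auto. auto. Qed.

Lemma phi_polar bt d : Re bt < 0 -> 1 < d ->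
  let R := Cnorm bt * ln d in let th := Carg (Copp bt) in
  phi bt d = Cadd (CR (euler_gamma + ln R + Ei0_neg R)) (Csub (logEi0_polar R th) (logEi0_polar R 0)).
Proof. intros Hb Hd R th. set (b := Copp bt) in th.
  assert (Hbp : 0 < Re b) by (unfold b; rewrite Re_opp; lra).
  assert (Hr : 0 < Cnorm bt) by (pose proof (Re_le_Cnorm bt); pose proof (Rle_abs (- Re bt));
    rewrite Rabs_Ropp in H0; lra).
  assert (HT : 0 < ln d) by (apply ln_pos; auto).
  assert (Hbt : Cmul bt (CR (ln d)) = neg_polar R th).
  { replace bt with (Copp b) by (unfold b; ceq; ring). rewrite (polar_form b Hbp).
    unfold neg_polar, R, th, b. rewrite Cnorm_opp. ceq; ring. }
  unfold phi. rewrite Clog_CR by auto. rewrite Hbt. fold b. unfold logEi0_polar.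
  replace (neg_polar R 0) with (CR (- R)) by (unfold neg_polar; rewrite cos_0, sin_0; ceq; ring).
  replace (ln (ln d)) with (ln R - ln (Cnorm bt)) by (unfold R; rewrite ln_mult by auto; ring).
  unfold Ei0_neg. pose proof (Im_Ei0_real (- R)).
  unfold Clog. fold th. rewrite <- (Cnorm_opp bt). fold b. ceq; [ring|rewrite H; ring]. Qed.

Lemma phi_tends_to_0 bt : Re bt < 0 -> tends near_infty (phi bt) (CR 0).
Proof. intro Hb. set (r := Cnorm bt). set (th := Carg (Copp bt)).
  assert (Hr : 0 < r) by (unfold r; pose proof (Re_le_Cnorm bt); pose proof (Rle_abs (- Re bt));
    rewrite Rabs_Ropp in H0; lra).
  assert (Hth : Rabs th < PI / 2) by (apply Carg_bound; rewrite Re_opp; lra).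
  assert (Hc : 0 < cos th) by (apply cos_gt_0; apply Rabs_def2 in Hth; lra).
  apply (tends_of_le near_infty near_infty_filter _ _
    (fun x => Rabs (euler_gamma + ln (r * ln x) + Ei0_neg (r * ln x)) + Rabs th * exp (- (r * cos th * ln x)))).
  - intros e He. destruct (gamma_Ei0_limit (e/2)) as [M1 HM1]; [lra|].
    destruct near_infty_filter as [_ [Hand Hmono]].
    apply (Hmono (fun x => M1 / r < ln x /\ Rabs th * exp (- (r * cos th * ln x)) < e / 2)).
    + intros x [H1 H2]. assert (M1 < r * ln x).
      { apply Rmult_lt_compat_l with (r := r) in H1; auto.
        replace (r * (M1 / r)) with M1 in H1 by (field; lra). auto. }
      specialize (HM1 _ H). lra.
    + apply Hand. apply near_infty_ln_gt. apply near_infty_exp_small; [apply Rmult_lt_0_compat|]; lra.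
  - exists 1. intros x Hx. assert (HT : 0 < ln x) by (apply ln_pos; auto).
    replace (Csub (phi bt x) (CR 0)) with (phi bt x) by (ceq; ring).
    rewrite (phi_polar bt x Hb Hx). fold r th. eapply Rle_trans. apply Cnorm_add.
    rewrite Cnorm_CR. apply Rplus_le_compat_l.
    replace (r * cos th * ln x) with (r * ln x * cos th) by ring.
    apply logEi0_polar_increment_le; auto. nra. Qed.

Lemma has_cderiv_Crpow w x : 0 < x ->
  has_cderiv (fun y => Crpow y w) x (Cmul (Crpow x w) (Cmul w (CR (/ x)))).
Proof. intro H. apply has_cderiv_Cexp, has_cderiv_cmul, has_cderiv_CR, derivable_pt_lim_ln; auto. Qed.
Lemma Crpow_add x a b : Crpow x (Cadd a b) = Cmul (Crpow x a) (Crpow x b).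
Proof. unfold Crpow. rewrite <- Cexp_add. f_equal. ceq; ring. Qed.
Lemma Cnorm_Crpow x w : Cnorm (Crpow x w) = exp (Re w * ln x).
Proof. unfold Crpow. rewrite Cnorm_Cexp. csimpl. f_equal. ring. Qed.
Lemma Crpow_CR x a : 0 < x -> Crpow x (CR a) = CR (exp (a * ln x)).
Proof. intro H. unfold Crpow, Cexp. ceq; replace (a * 0 + 0 * ln x) with 0 by ring.
  - rewrite cos_0. replace (a * ln x - 0 * 0) with (a * ln x) by ring. ring.
  - rewrite sin_0. ring. Qed.
Lemma Crpow_m1 x : 0 < x -> Crpow x (CR (-1)) = CR (/ x).
Proof. intro H. rewrite Crpow_CR by auto. f_equal.
  replace (-1 * ln x) with (- ln x) by ring. rewrite exp_Ropp, exp_ln; auto. Qed.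
Lemma Crpow_1 x : 0 < x -> Crpow x (CR 1) = CR x.
Proof. intro H. rewrite Crpow_CR by auto. f_equal. rewrite Rmult_1_l, exp_ln; auto. Qed.

Lemma Crpow_sub1_le w x : 1 < x -> ln x <= 1 ->
  Cnorm (Csub (Crpow x w) (CR 1)) <= Cnorm w * exp (Cnorm w) * ln x.
Proof. intros Hx HL. assert (HL0 : 0 < ln x) by (apply ln_pos; auto). unfold Crpow.
  eapply Rle_trans. apply Cexp_sub1_le. rewrite Cnorm_mulCR, Rabs_right by lra.
  replace (Cnorm w * ln x * exp (Rmax 0 (Re (Cmul w (CR (ln x))))))
    with (Cnorm w * exp (Rmax 0 (Re (Cmul w (CR (ln x))))) * ln x) by ring.
  apply Rmult_le_compat_r. lra. apply Rmult_le_compat_l. apply Cnorm_ge0.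
  apply exp_le. rewrite Re_mul, Re_CR, Im_CR. replace (Re w * ln x - Im w * 0) with (Re w * ln x) by ring.
  eapply Rle_trans. apply (Rmax0_mul_le (Re w) (ln x) 1). lra. rewrite Rmult_1_r. apply Rmax0_Re_le. Qed.

Lemma Crpow_tends_near1 w : tends near1 (fun x => Crpow x w) (CR 1).
Proof. apply (tends_near1_of_sqrt_ln _ _ (Cnorm w * exp (Cnorm w))). intros x Hx HL.
  eapply Rle_trans. apply Crpow_sub1_le; auto. apply Rmult_le_compat_l.
  - pose proof (Cnorm_ge0 w); pose proof (exp_pos (Cnorm w)); nra.
  - apply le_sqrt. pose proof (ln_pos x Hx); lra. Qed.

Definition phi_real b y :=
  Cadd (Cadd (Cadd (CR euler_gamma) (CR (ln (ln y)))) (Clog (Copp b))) (Ei0 (Cmul b (CR (ln y)))).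
Lemma phi_real_eq b y : 1 < y -> phi b y = phi_real b y.
Proof. intro H. unfold phi, phi_real. rewrite Clog_CR by (apply ln_pos; auto). auto. Qed.

(* [d/du (log u + Ei0 (b u)) = e^{b u} / u]. *)
Lemma has_cderiv_phi b x : 1 < x -> has_cderiv (phi b) x (Cmul (Crpow x b) (CR (/ (x * ln x)))).
Proof. intro Hx. apply (has_cderiv_ext_loc (phi_real b)).
  { exists (x - 1). split. lra. intros t Ht. rewrite phi_real_eq; auto. apply Rabs_def2 in Ht. lra. }
  assert (HL : 0 < ln x) by (apply ln_pos; auto).
  unfold phi_real. eapply has_cderiv_eq. apply has_cderiv_add. apply has_cderiv_add. apply has_cderiv_add.
  - apply has_cderiv_const.
  - apply has_cderiv_CR. apply has_deriv_ln; auto. apply derivable_pt_lim_ln. lra.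
  - apply has_cderiv_const.
  - apply (has_cderiv_Ei0 (fun y => Cmul b (CR (ln y))) (fun y => Cmul b (CR (/ y))) x (x - 1)
      (Cnorm b * (2 * x + 1))); [lra|].
    intros t Ht. apply Rabs_def2 in Ht. assert (1 < t) by lra.
    pose proof (ln_pos t H). pose proof (ln_le_sub1 t ltac:(lra)). pose proof (Cnorm_ge0 b).
    assert (/ t < 1) by (rewrite <- Rinv_1; apply Rinv_lt_contravar; lra).
    assert (0 < / t) by (apply Rinv_0_lt_compat; lra).
    split; [apply has_cderiv_cmul, has_cderiv_CR, derivable_pt_lim_ln; lra|].
    rewrite !Cnorm_mulCR, !Rabs_right by lra. split; apply Rmult_le_compat_l; lra.
  - unfold Crpow. rewrite <- Cexp_exprel. ceq; field; lra. Qed.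

Lemma mul_abs_ln_le_sqrt L : 0 < L <= 1 -> L * Rabs (ln L) <= 2 * sqrt L.
Proof. intro H. assert (Hs : 0 < sqrt L) by (apply sqrt_lt_R0; lra).
  assert (HsL : sqrt L * sqrt L = L) by (apply sqrt_sqrt; lra).
  assert (ln L <= 0) by (rewrite <- ln_1; apply ln_le; lra).
  rewrite Rabs_left1 by auto.
  assert (ln L = 2 * ln (sqrt L)) by (rewrite <- HsL at 1; rewrite ln_mult by auto; ring).
  assert (- ln (sqrt L) <= / sqrt L - 1)
    by (rewrite <- ln_Rinv by auto; apply ln_le_sub1, Rinv_0_lt_compat; auto).
  rewrite H1, <- HsL at 1.
  replace (sqrt L * sqrt L * - (2 * ln (sqrt L))) with (2 * L * - ln (sqrt L)) by (rewrite HsL; ring).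
  apply Rle_trans with (2 * L * (/ sqrt L - 1)); [apply Rmult_le_compat_l; lra|].
  set (q := sqrt L) in *. replace (2 * L * (/ q - 1)) with (2 * q - 2 * L) by (rewrite <- HsL; field; lra).
  lra. Qed.

(* Near [x = 1] the singular terms [ln (ln x)] of the two [phi]'s cancel to first order. *)
Lemma phi_combination_near1_le b1 b2 g K : 0 <= K ->
  (forall x, 1 < x -> ln x <= 1 -> Cnorm (Csub (CR 1) (g x)) <= K * ln x /\ Cnorm (g x) <= K) ->
  exists C, forall x, 1 < x -> ln x <= 1 ->
    Cnorm (Csub (Csub (phi b1 x) (Cmul (phi b2 x) (g x))) (Csub (Clog (Copp b1)) (Clog (Copp b2))))
      <= C * sqrt (ln x).
Proof. intros HK Hg.
  exists (K * (Rabs euler_gamma + 2 + Cnorm (Clog (Copp b2))) + Cnorm b1 * exp (Cnorm b1)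
          + Cnorm b2 * exp (Cnorm b2) * K).
  intros x Hx HL1. destruct (Hg x Hx HL1) as [HG Hgx]. rewrite !phi_real_eq by auto. unfold phi_real.
  set (L := ln x) in *. assert (HL : 0 < L) by (apply ln_pos; auto).
  set (G := Csub (CR 1) (g x)) in HG.
  set (C2 := Clog (Copp b2)). set (E1 := Ei0 (Cmul b1 (CR L))). set (E2 := Ei0 (Cmul b2 (CR L))).
  replace (Csub (Csub (Cadd (Cadd (Cadd (CR euler_gamma) (CR (ln L))) (Clog (Copp b1))) E1)
        (Cmul (Cadd (Cadd (Cadd (CR euler_gamma) (CR (ln L))) C2) E2) (g x))) (Csub (Clog (Copp b1)) C2))
    with (Cadd (Cadd (Cmul (CR (euler_gamma + ln L)) G) (Cmul C2 G)) (Csub E1 (Cmul E2 (g x))))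
    by (unfold G; ceq; ring).
  assert (Hs : L <= sqrt L) by (apply le_sqrt; lra).
  assert (Hls : L * Rabs (ln L) <= 2 * sqrt L) by (apply mul_abs_ln_le_sqrt; lra).
  pose proof (Rabs_pos euler_gamma). pose proof (Cnorm_ge0 C2). pose proof (Cnorm_ge0 G).
  pose proof (Cnorm_ge0 b1). pose proof (exp_pos (Cnorm b1)).
  pose proof (Cnorm_ge0 b2). pose proof (exp_pos (Cnorm b2)). pose proof (Cnorm_ge0 (g x)).
  assert (HA : Cnorm (Cmul (CR (euler_gamma + ln L)) G) <= K * (Rabs euler_gamma + 2) * sqrt L).
  { rewrite Cnorm_CRmul. eapply Rle_trans. apply Rmult_le_compat_r. apply Cnorm_ge0. apply Rabs_triang.
    eapply Rle_trans. apply Rmult_le_compat_l. pose proof (Rabs_pos (ln L)); lra. exact HG.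
    assert (K * Rabs euler_gamma * L <= K * Rabs euler_gamma * sqrt L) by (apply Rmult_le_compat_l; nra).
    assert (K * (L * Rabs (ln L)) <= K * (2 * sqrt L)) by (apply Rmult_le_compat_l; auto).
    nra. }
  assert (HB : Cnorm (Cmul C2 G) <= K * Cnorm C2 * sqrt L).
  { rewrite Cnorm_mul. apply Rle_trans with (Cnorm C2 * (K * L)); [apply Rmult_le_compat_l; auto|].
    assert (K * L <= K * sqrt L) by (apply Rmult_le_compat_l; auto). nra. }
  assert (HC : Cnorm E1 <= Cnorm b1 * exp (Cnorm b1) * sqrt L).
  { eapply Rle_trans. apply Cnorm_Ei0_small; lra. apply Rmult_le_compat_l; nra. }
  assert (HD : Cnorm (Cmul E2 (g x)) <= Cnorm b2 * exp (Cnorm b2) * K * sqrt L).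
  { rewrite Cnorm_mul. pose proof (Cnorm_Ei0_small b2 L ltac:(lra)). fold E2 in H7.
    apply Rle_trans with (Cnorm b2 * exp (Cnorm b2) * L * K). apply Rmult_le_compat; auto. apply Cnorm_ge0.
    assert (0 <= Cnorm b2 * exp (Cnorm b2) * K) by (apply Rmult_le_pos; nra).
    replace (Cnorm b2 * exp (Cnorm b2) * L * K) with (Cnorm b2 * exp (Cnorm b2) * K * L) by ring.
    apply Rmult_le_compat_l; auto. }
  eapply Rle_trans. apply Cnorm_add. eapply Rle_trans. apply Rplus_le_compat. apply Cnorm_add. apply Cnorm_sub.
  fold C2. nra. Qed.

Lemma phi_growth b : exists C, forall x, exp 1 <= x ->
  Cnorm (phi b x) <= C * (1 + ln x) * exp (Rmax 0 (Re b) * ln x).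
Proof. exists (Rabs euler_gamma + Cnorm (Clog (Copp b)) + 1 + Cnorm b). intros x Hx.
  assert (Hx1 : 1 < x) by (pose proof (exp_ineq1 1 ltac:(lra)); lra).
  assert (HL : 1 <= ln x) by (rewrite <- (ln_exp 1); apply ln_le; auto; apply exp_pos).
  rewrite phi_real_eq by auto. unfold phi_real. set (L := ln x) in *.
  assert (He : 1 <= exp (Rmax 0 (Re b) * L)) by (rewrite <- exp_0; apply exp_le; pose proof (Rmax_l 0 (Re b)); nra).
  assert (Hln : Rabs (ln L) <= L).
  { rewrite Rabs_right. pose proof (ln_le_sub1 L); lra. rewrite <- ln_1. apply Rle_ge, ln_le; lra. }
  eapply Rle_trans. apply Cnorm_add. eapply Rle_trans. apply Rplus_le_compat_r. apply Cnorm_add.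
  eapply Rle_trans. apply Rplus_le_compat_r. apply Rplus_le_compat_r. apply Cnorm_add.
  rewrite !Cnorm_CR. pose proof (Cnorm_Ei0_le b L ltac:(lra)).
  pose proof (Rabs_pos euler_gamma). pose proof (Cnorm_ge0 (Clog (Copp b))). pose proof (Cnorm_ge0 b).
  set (E := exp (Rmax 0 (Re b) * L)) in *.
  assert (Rabs euler_gamma <= Rabs euler_gamma * (1 + L) * E)
    by (apply Rle_trans with (Rabs euler_gamma * 1 * 1); [lra|]; apply Rmult_le_compat; nra).
  assert (Cnorm (Clog (Copp b)) <= Cnorm (Clog (Copp b)) * (1 + L) * E)
    by (apply Rle_trans with (Cnorm (Clog (Copp b)) * 1 * 1); [lra|]; apply Rmult_le_compat; nra).
  assert (Rabs (ln L) <= 1 * (1 + L) * E) by nra.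
  assert (Cnorm b * L * E <= Cnorm b * (1 + L) * E) by (apply Rmult_le_compat_r; nra).
  nra. Qed.

(* [Psi a x = int_1^x phi a y / y^2 dy], see [Phi_eq]. *)
Definition Psi_const a := Csub (Clog (Copp (Csub a (CR 1)))) (Clog (Copp a)).
Definition Psi a x := Csub (Csub (phi (Csub a (CR 1)) x) (Cmul (phi a x) (CR (/ x)))) (Psi_const a).

Lemma has_cderiv_Psi a x : 1 < x -> has_cderiv (Psi a) x (Cdiv (phi a x) (CR (x ^ 2))).
Proof. intro Hx. unfold Psi. eapply has_cderiv_eq.
  apply has_cderiv_sub; [apply has_cderiv_sub|apply has_cderiv_const].
  - apply has_cderiv_phi; auto.
  - apply has_cderiv_mul. apply has_cderiv_phi; auto. apply has_cderiv_CR, has_deriv_inv. apply has_deriv_id. lra.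
  - assert (Crpow x (Csub a (CR 1)) = Cmul (Crpow x a) (CR (/ x))).
    { replace (Csub a (CR 1)) with (Cadd a (CR (-1))) by (ceq; ring). rewrite Crpow_add, Crpow_m1 by lra. auto. }
    rewrite H. unfold Cdiv. rewrite Cinv_CR by (apply pow_nonzero; lra).
    assert (ln x <> 0) by (pose proof (ln_pos x Hx); lra). ceq; field; split; lra. Qed.

Lemma Psi_near1 a : exists C, forall x, 1 < x -> ln x <= 1 -> Cnorm (Psi a x) <= C * sqrt (ln x).
Proof. apply (phi_combination_near1_le (Csub a (CR 1)) a (fun y => CR (/ y)) 1); [lra|].
  intros x Hx HL. assert (/ x < 1) by (rewrite <- Rinv_1; apply Rinv_lt_contravar; lra).
  assert (0 < / x) by (apply Rinv_0_lt_compat; lra). pose proof (one_sub_inv_le_ln x ltac:(lra)).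
  replace (Csub (CR 1) (CR (/ x))) with (CR (1 - / x)) by (ceq; ring).
  rewrite !Cnorm_CR, !Rabs_right; lra. Qed.

Lemma Psi_tends_near1 a : tends near1 (Psi a) (CR 0).
Proof. destruct (Psi_near1 a) as [C HC]. apply (tends_near1_of_sqrt_ln _ _ C). intros x Hx HL.
  replace (Csub (Psi a x) (CR 0)) with (Psi a x) by (ceq; ring). auto. Qed.

Lemma Psi_growth a : 0 < Re a -> exists K, forall x, exp 1 <= x ->
  Cnorm (Psi a x) <= K * (1 + ln x) * exp (Rmax 0 (Re a - 1) * ln x).
Proof. intros Ha. set (rho := Rmax 0 (Re a - 1)).
  destruct (phi_growth (Csub a (CR 1))) as [C1 HC1]. destruct (phi_growth a) as [C2 HC2].
  exists (Rabs C1 + Rabs C2 + Cnorm (Psi_const a)). intros x Hx.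
  assert (Hx1 : 1 < x) by (pose proof (exp_ineq1 1 ltac:(lra)); lra).
  assert (HL : 1 <= ln x) by (rewrite <- (ln_exp 1); apply ln_le; auto; apply exp_pos).
  specialize (HC1 x Hx). specialize (HC2 x Hx). unfold Psi. set (L := ln x) in *.
  rewrite Re_sub, Re_CR in HC1. fold rho in HC1. rewrite Rmax_right in HC2 by lra.
  assert (Hix : / x = exp (- L)) by (unfold L; rewrite exp_Ropp, exp_ln; lra).
  assert (Hle : exp (Re a * L) * exp (- L) <= exp (rho * L)).
  { rewrite <- exp_plus. apply exp_le. unfold rho. pose proof (Rmax_r 0 (Re a - 1)). nra. }
  assert (He1 : 1 <= exp (rho * L)) by (rewrite <- exp_0; apply exp_le; unfold rho; pose proof (Rmax_l 0 (Re a - 1)); nra).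
  pose proof (exp_pos (rho * L)). pose proof (exp_pos (- L)). pose proof (Cnorm_ge0 (Psi_const a)).
  pose proof (Rle_abs C1). pose proof (Rle_abs C2). pose proof (Rabs_pos C1). pose proof (Rabs_pos C2).
  eapply Rle_trans. apply Cnorm_sub. eapply Rle_trans. apply Rplus_le_compat_r. apply Cnorm_sub.
  rewrite Cnorm_mulCR, Rabs_right by (left; apply Rinv_0_lt_compat; lra). rewrite Hix.
  assert (T2 : Cnorm (phi a x) * exp (- L) <= Rabs C2 * (1 + L) * exp (rho * L)).
  { apply Rle_trans with (Rabs C2 * (1 + L) * (exp (Re a * L) * exp (- L))).
    - rewrite <- Rmult_assoc. apply Rmult_le_compat_r; [lra|]. eapply Rle_trans; [exact HC2|].
      apply Rmult_le_compat_r; [left; apply exp_pos|]. apply Rmult_le_compat_r; lra.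
    - apply Rmult_le_compat_l; [nra|exact Hle]. }
  assert (T1 : Cnorm (phi (Csub a (CR 1)) x) <= Rabs C1 * (1 + L) * exp (rho * L))
    by (eapply Rle_trans; [exact HC1|]; apply Rmult_le_compat_r; nra).
  assert (T3 : Cnorm (Psi_const a) <= Cnorm (Psi_const a) * (1 + L) * exp (rho * L))
    by (apply Rle_trans with (Cnorm (Psi_const a) * 1 * 1); [lra|]; apply Rmult_le_compat; nra).
  nra. Qed.

Lemma Psi_bound a : 0 < Re a -> exists K, 0 <= K /\ forall x, 1 < x ->
  Cnorm (Psi a x) <= K * (1 + ln x) * exp (Rmax 0 (Re a - 1) * ln x).
Proof. intro Ha. destruct (Psi_near1 a) as [C1 HC1]. destruct (Psi_growth a Ha) as [C2 HC2].
  exists (Rabs C1 + Rabs C2). split; [pose proof (Rabs_pos C1); pose proof (Rabs_pos C2); lra|].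
  intros x Hx. assert (HL0 : 0 < ln x) by (apply ln_pos; auto).
  set (E := exp (Rmax 0 (Re a - 1) * ln x)).
  assert (He1 : 1 <= E) by (unfold E; rewrite <- exp_0; apply exp_le, Rmult_le_pos; [apply Rmax_l|lra]).
  pose proof (Rabs_pos C1). pose proof (Rabs_pos C2). pose proof (Rle_abs C1). pose proof (Rle_abs C2).
  pose proof (Cnorm_ge0 (Psi a x)).
  destruct (Rle_dec (ln x) 1).
  - specialize (HC1 x Hx r).
    assert (sqrt (ln x) <= 1) by (rewrite <- sqrt_1; apply sqrt_le_1_alt; auto).
    pose proof (sqrt_pos (ln x)).
    apply Rle_trans with (Rabs C1); [nra|].
    apply Rle_trans with ((Rabs C1 + Rabs C2) * 1 * 1); [lra|]. apply Rmult_le_compat; nra.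
  - assert (exp 1 <= x) by (left; rewrite <- (exp_ln x) by lra; apply exp_increasing; lra).
    specialize (HC2 x H4). eapply Rle_trans; [exact HC2|]. fold E.
    apply Rmult_le_compat_r; [lra|]. apply Rmult_le_compat_r; lra. Qed.

(** * A primitive of [Psi a x * x^{-s}] *)

Section MellinPrimitive.
Variables (a s : Cplx).
Hypotheses (Ha : 0 < Re a) (Hs : 1 < Re s) (Has : Re a < Re s).

Definition Mellin_integrand x := Cmul (Psi a x) (Crpow x (Copp s)).

Definition Mellin_primitive x :=
  Csub (Cmul (Cmul (Psi a x) (Crpow x (Csub (CR 1) s))) (Cinv (Csub (CR 1) s)))
       (Cmul (Csub (phi (Csub a s) x) (Cmul (phi a x) (Crpow x (Copp s)))) (Cinv (Cmul s (Csub (CR 1) s)))).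

Definition Mellin_value := Cmul (Csub (Clog (Copp (Csub a s))) (Clog (Copp a))) (Cinv (Cmul s (Csub (CR 1) s))).

Lemma one_sub_s_neq0 : Csub (CR 1) s <> CR 0.
Proof. apply neq0_of_Re. rewrite Re_sub, Re_CR. lra. Qed.

Lemma s_mul_one_sub_s_neq0 : Cmul s (Csub (CR 1) s) <> CR 0.
Proof. intro h. apply (f_equal Cnorm) in h. rewrite Cnorm_mul, Cnorm_CR, Rabs_R0 in h.
  pose proof (Cnorm_pos s (neq0_of_Re s ltac:(lra))). pose proof (Cnorm_pos _ one_sub_s_neq0). nra. Qed.

Lemma has_cderiv_Mellin_primitive x : 1 < x -> has_cderiv Mellin_primitive x (Mellin_integrand x).
Proof. intro Hx. assert (Hx0 : 0 < x) by lra. assert (HL : ln x <> 0) by (pose proof (ln_pos x Hx); lra).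
  unfold Mellin_primitive. eapply has_cderiv_eq.
  { apply has_cderiv_sub; apply has_cderiv_mulc.
    - apply has_cderiv_mul. apply has_cderiv_Psi; auto. apply has_cderiv_Crpow; auto.
    - apply has_cderiv_sub. apply has_cderiv_phi; auto.
      apply has_cderiv_mul. apply has_cderiv_phi; auto. apply has_cderiv_Crpow; auto. }
  assert (E1 : Crpow x (Csub (CR 1) s) = Cmul (CR x) (Crpow x (Copp s))).
  { replace (Csub (CR 1) s) with (Cadd (CR 1) (Copp s)) by (ceq; ring). rewrite Crpow_add, Crpow_1; auto. }
  assert (E2 : Crpow x (Csub a s) = Cmul (Crpow x a) (Crpow x (Copp s))).
  { replace (Csub a s) with (Cadd a (Copp s)) by (ceq; ring). rewrite Crpow_add; auto. }
  assert (Hu : Cmul (Csub (CR 1) s) (Cinv (Csub (CR 1) s)) = CR 1) by apply Cmul_inv, one_sub_s_neq0.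
  assert (Hv : Cmul s (Cinv (Cmul s (Csub (CR 1) s))) = Cinv (Csub (CR 1) s)).
  { apply Cinv_unique. apply one_sub_s_neq0.
    transitivity (Cmul (Cmul s (Csub (CR 1) s)) (Cinv (Cmul s (Csub (CR 1) s)))); [ceq; ring|].
    apply Cmul_inv, s_mul_one_sub_s_neq0. }
  rewrite !E1, !E2. unfold Cdiv. rewrite Cinv_CR by (apply pow_nonzero; lra).
  unfold Mellin_integrand. set (A := Psi a x). set (P := Crpow x (Copp s)). set (F := phi a x).
  set (u := Cinv (Csub (CR 1) s)). set (v := Cinv (Cmul s (Csub (CR 1) s))). fold u in Hu, Hv. fold v in Hv.
  transitivity (Cadd (Cmul (Cmul A P) (Cmul (Csub (CR 1) s) u)) (Cmul (Cmul (Cmul F P) (CR (/ x))) (Csub u (Cmul s v)))).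
  - ceq; field; repeat split; auto; lra.
  - rewrite Hu, Hv. ceq; ring. Qed.

Lemma Mellin_primitive_tends_near1 : tends near1 Mellin_primitive (Copp Mellin_value).
Proof. unfold Mellin_primitive, Mellin_value.
  replace (Copp (Cmul (Csub (Clog (Copp (Csub a s))) (Clog (Copp a))) (Cinv (Cmul s (Csub (CR 1) s))))) with
    (Csub (Cmul (Cmul (CR 0) (CR 1)) (Cinv (Csub (CR 1) s)))
          (Cmul (Csub (Clog (Copp (Csub a s))) (Clog (Copp a))) (Cinv (Cmul s (Csub (CR 1) s))))) by (ceq; ring).
  apply (tends_sub near1 near1_filter); apply (tends_mul near1 near1_filter); try apply tends_const, near1_filter.
  - apply (tends_mul near1 near1_filter). apply Psi_tends_near1. apply Crpow_tends_near1.
  - set (K := Cnorm s * exp (Cnorm s) + 1).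
    assert (HK : 0 <= K) by (unfold K; pose proof (Cnorm_ge0 s); pose proof (exp_pos (Cnorm s)); nra).
    destruct (phi_combination_near1_le (Csub a s) a (fun x => Crpow x (Copp s)) K HK) as [C HC].
    + intros x Hx HL. pose proof (ln_pos x Hx). split.
      * pose proof (Crpow_sub1_le (Copp s) x Hx HL). rewrite Cnorm_opp in H0. rewrite Cnorm_sub_sym.
        eapply Rle_trans; [exact H0|]. apply Rmult_le_compat_r; unfold K; lra.
      * rewrite Cnorm_Crpow, Re_opp. assert (exp (- Re s * ln x) <= 1) by (rewrite <- exp_0; apply exp_le; nra).
        unfold K. pose proof (Cnorm_ge0 s); pose proof (exp_pos (Cnorm s)). nra.
    + apply (tends_near1_of_sqrt_ln _ _ C). exact HC. Qed.

Lemma Mellin_primitive_tends_infty : tends near_infty Mellin_primitive (CR 0).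
Proof. set (rho := Rmax 0 (Re a - 1)).
  assert (Hrho : rho < Re s - 1) by (unfold rho, Rmax; destruct (Rle_dec 0 (Re a - 1)); lra).
  replace (CR 0) with (Csub (Cmul (CR 0) (Cinv (Csub (CR 1) s))) (Cmul (Csub (CR 0) (CR 0))
    (Cinv (Cmul s (Csub (CR 1) s))))) by (ceq; ring).
  unfold Mellin_primitive.
  apply (tends_sub near_infty near_infty_filter); apply (tends_mul near_infty near_infty_filter);
    try apply tends_const, near_infty_filter.
  - destruct (Psi_bound a Ha) as [K [_ HK]].
    apply (tends_near_infty_of_decay _ _ K (Re s - 1 - rho) 1); [lra|].
    intros x Hx. replace (Csub (Cmul (Psi a x) (Crpow x (Csub (CR 1) s))) (CR 0))
      with (Cmul (Psi a x) (Crpow x (Csub (CR 1) s))) by (ceq; ring).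
    rewrite Cnorm_mul, Cnorm_Crpow, Re_sub, Re_CR.
    eapply Rle_trans. apply Rmult_le_compat_r. left; apply exp_pos. apply HK; auto.
    replace (exp (- ((Re s - 1 - rho) * ln x))) with (exp (rho * ln x) * exp ((1 - Re s) * ln x))
      by (rewrite <- exp_plus; f_equal; ring).
    fold rho. right; ring.
  - apply (tends_sub near_infty near_infty_filter).
    + apply phi_tends_to_0. rewrite Re_sub; lra.
    + destruct (phi_growth a) as [C HC].
      apply (tends_near_infty_of_decay _ _ C (Re s - Re a) (exp 1)); [lra|].
      intros x Hx. replace (Csub (Cmul (phi a x) (Crpow x (Copp s))) (CR 0))
        with (Cmul (phi a x) (Crpow x (Copp s))) by (ceq; ring).
      rewrite Cnorm_mul, Cnorm_Crpow, Re_opp. eapply Rle_trans. apply Rmult_le_compat_r. left; apply exp_pos.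
      apply HC. lra. rewrite Rmax_right by lra.
      rewrite Rmult_assoc, <- exp_plus. right. f_equal. f_equal. ring. Qed.

Lemma Mellin_integrand_le : exists K c, 0 <= K /\ 0 < c /\
  forall x, 1 < x -> Cnorm (Mellin_integrand x) <= K * exp (- (1 + c) * ln x).
Proof. set (rho := Rmax 0 (Re a - 1)). set (kap := Re s - rho - 1).
  assert (Hk : 0 < kap) by (unfold kap, rho, Rmax; destruct (Rle_dec 0 (Re a - 1)); lra).
  destruct (Psi_bound a Ha) as [K [HK0 HK]].
  exists (K * (1 + 2 / kap)), (kap / 2). split; [|split; [lra|]].
  { apply Rmult_le_pos; auto. pose proof (Rdiv_lt_0_compat 2 kap ltac:(lra) Hk); lra. }
  intros x Hx. unfold Mellin_integrand. rewrite Cnorm_mul, Cnorm_Crpow, Re_opp.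
  assert (HL : 0 < ln x) by (apply ln_pos; auto).
  eapply Rle_trans. apply Rmult_le_compat_r. left; apply exp_pos. apply HK; auto. fold rho.
  assert (E1 : exp (rho * ln x) * exp (- Re s * ln x) = exp (- (kap * ln x)) * exp (- ln x))
    by (rewrite <- !exp_plus; f_equal; unfold kap; ring).
  assert (E2 : exp (- (1 + kap / 2) * ln x) = exp (- (kap * ln x / 2)) * exp (- ln x))
    by (rewrite <- exp_plus; f_equal; field).
  rewrite E2, Rmult_assoc, E1.
  replace (K * (1 + ln x) * (exp (- (kap * ln x)) * exp (- ln x)))
    with (K * exp (- ln x) * ((1 + ln x) * exp (- (kap * ln x)))) by ring.
  replace (K * (1 + 2 / kap) * (exp (- (kap * ln x / 2)) * exp (- ln x)))
    with (K * exp (- ln x) * ((1 + 2 / kap) * exp (- (kap * ln x / 2)))) by ring.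
  apply Rmult_le_compat_l. pose proof (exp_pos (- ln x)); nra. apply one_plus_mul_exp_le; lra. Qed.

End MellinPrimitive.

Lemma continuity_pt_eps f x : continuity_pt f x ->
  forall e, 0 < e -> exists d, 0 < d /\ forall t, Rabs (t - x) < d -> Rabs (f t - f x) < e.
Proof. intros H e He. destruct (H e He) as [d [Hd Hf]]. exists d. split; auto. intros t Ht.
  destruct (Req_dec x t). subst. rewrite Rminus_diag, Rabs_R0; auto.
  apply (Hf t). split. split. constructor. auto. simpl. unfold Rdist. auto. Qed.

Lemma has_cderiv_continuous_eps F x l : has_cderiv F x l ->
  forall e, 0 < e -> exists d, 0 < d /\ forall t, Rabs (t - x) < d -> Cnorm (Csub (F t) (F x)) < e.
Proof. intros H e He. destruct (has_cderiv_continuous F x l H) as [H1 H2].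
  destruct (continuity_pt_eps _ _ H1 (e/2)) as [d1 [Hd1 P1]]; [lra|].
  destruct (continuity_pt_eps _ _ H2 (e/2)) as [d2 [Hd2 P2]]; [lra|].
  exists (Rmin d1 d2). split. apply Rmin_pos; auto. intros t Ht.
  pose proof (Rmin_l d1 d2). pose proof (Rmin_r d1 d2).
  eapply Rle_lt_trans. apply Cnorm_le_Re_Im. rewrite Re_sub, Im_sub.
  specialize (P1 t ltac:(lra)). specialize (P2 t ltac:(lra)). lra. Qed.

Lemma has_cderiv_Cnorm_continuous F x l : has_cderiv F x l -> continuity_pt (fun t => Cnorm (F t)) x.
Proof. intro H. destruct (has_cderiv_continuous F x l H) as [H1 H2]. unfold Cnorm.
  apply (continuity_pt_ext (comp sqrt (fun t => Re (F t) ^ 2 + Im (F t) ^ 2))); [reflexivity|].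
  apply continuity_pt_comp.
  - apply (continuity_pt_ext (plus_fct (mult_fct (fun t => Re (F t)) (fun t => Re (F t)))
      (mult_fct (fun t => Im (F t)) (fun t => Im (F t))))).
    + intro; unfold plus_fct, mult_fct; simpl; ring.
    + apply continuity_pt_plus; apply continuity_pt_mult; auto.
  - apply continuity_pt_sqrt. nra. Qed.

Lemma is_RInt_of_deriv (F f g : R -> R) a b : a <= b ->
  (forall x, a <= x <= b -> has_deriv F x (f x)) -> (forall x, a <= x <= b -> continuity_pt f x) ->
  (forall x, a <= x <= b -> g x = f x) -> is_RInt g a b (F b - F a).
Proof. intros Hab HD Hc Hg.
  assert (H : RInt.is_RInt f a b (minus (F b) (F a))).
  { apply (is_RInt_derive (V := R_CompleteNormedModule) F f); intros x Hx;
      rewrite Rmin_left, Rmax_right in Hx by lra.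
    - apply is_derive_Reals, HD; auto.
    - apply continuity_pt_filterlim. apply Hc; auto. }
  assert (H' : RInt.is_RInt g a b (minus (F b) (F a))).
  { apply (is_RInt_ext f); auto. intros x Hx. rewrite Rmin_left, Rmax_right in Hx by lra.
    symmetry; apply Hg; lra. }
  assert (Hex : ex_RInt g a b) by (exists (minus (F b) (F a)); auto).
  exists (ex_RInt_Reals_0 g a b Hex). rewrite <- RInt_Reals. rewrite (is_RInt_unique g a b _ H'). reflexivity. Qed.

Lemma is_CRInt_of_deriv (F f g : R -> Cplx) a b : a <= b ->
  (forall x, a <= x <= b -> has_cderiv F x (f x)) -> (forall x, a <= x <= b -> exists l, has_cderiv f x l) ->
  (forall x, a <= x <= b -> g x = f x) -> is_CRInt g a b (Csub (F b) (F a)).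
Proof. intros Hab HD Hc Hg. split; [rewrite Re_sub|rewrite Im_sub].
  - apply (is_RInt_of_deriv (fun t => Re (F t)) (fun t => Re (f t))); auto.
    + intros; apply HD; auto.
    + intros x Hx. destruct (Hc x Hx) as [l Hl]. apply (has_cderiv_continuous f x l Hl).
    + intros; rewrite Hg; auto.
  - apply (is_RInt_of_deriv (fun t => Im (F t)) (fun t => Im (f t))); auto.
    + intros; apply HD; auto.
    + intros x Hx. destruct (Hc x Hx) as [l Hl]. apply (has_cderiv_continuous f x l Hl).
    + intros; rewrite Hg; auto. Qed.

Lemma is_CRInt_unique f a b v w : is_CRInt f a b v -> is_CRInt f a b w -> v = w.
Proof. intros [[p1 H1] [p2 H2]] [[p3 H3] [p4 H4]].
  apply Cplx_eq; [rewrite <- H1, <- H3|rewrite <- H2, <- H4]; apply RiemannInt_P5. Qed.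

Lemma has_Cint_open_unique f a b v w : a < b -> has_Cint_open f a b v -> has_Cint_open f a b w -> v = w.
Proof. intros Hab [_ Hv] [_ Hw].
  assert (Csub v w = CR 0); [|apply Cplx_eq; [apply (f_equal Re) in H|apply (f_equal Im) in H]; csimpl; lra].
  apply Cnorm_le_eq0. intros e He.
  destruct (Hv (e/2)) as [d1 [Hd1 P1]]; [lra|]. destruct (Hw (e/2)) as [d2 [Hd2 P2]]; [lra|].
  set (d := Rmin (Rmin d1 d2) (b - a)).
  assert (Hd : 0 < d) by (unfold d; apply Rmin_pos; [apply Rmin_pos|]; lra).
  assert (d <= d1 /\ d <= d2 /\ d <= b - a).
  { unfold d. pose proof (Rmin_l (Rmin d1 d2) (b - a)). pose proof (Rmin_r (Rmin d1 d2) (b - a)).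
    pose proof (Rmin_l d1 d2). pose proof (Rmin_r d1 d2). lra. }
  destruct (P1 (a + d/2) (b - d/2)) as [w1 [Hw1 N1]]; try lra.
  destruct (P2 (a + d/2) (b - d/2)) as [w2 [Hw2 N2]]; try lra.
  rewrite (is_CRInt_unique _ _ _ _ _ Hw1 Hw2) in N1.
  replace (Csub v w) with (Cadd (Csub v w2) (Csub w2 w)) by (ceq; ring).
  eapply Rle_lt_trans. apply Cnorm_add. rewrite Cnorm_sub_sym. lra. Qed.

Lemma Cint_open_eq f a b v : a < b -> has_Cint_open f a b v -> Cint_open f a b = v.
Proof. intros Hab H. unfold Cint_open. apply (has_Cint_open_unique f a b); auto.
  apply (epsilon_spec (inhabits (CR 0)) (fun v => has_Cint_open f a b v)). exists v; auto. Qed.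

Lemma has_cderiv_phi_div_sq a y : 1 < y -> exists l, has_cderiv (fun t => Cdiv (phi a t) (CR (t ^ 2))) y l.
Proof. intro Hy. eexists. unfold Cdiv. apply has_cderiv_mul. apply has_cderiv_phi; auto.
  apply (has_cderiv_ext_loc (fun t => CR (/ t ^ 2))).
  - exists (y - 1). split. lra. intros t Ht. apply Rabs_def2 in Ht.
    rewrite Cinv_CR; auto. apply pow_nonzero; lra.
  - apply has_cderiv_CR. apply has_deriv_inv. apply derivable_pt_lim_pow. apply pow_nonzero; lra. Qed.

Lemma Phi_eq a x : 1 < x -> Phi a x = Cmul (CR x) (Psi a x).
Proof. intro Hx.
  assert (HI : forall c d, 1 < c -> c <= d -> d <= x ->
    is_CRInt (fun t => Cdiv (phi a t) (CR (t ^ 2))) c d (Csub (Psi a d) (Psi a c))).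
  { intros c d Hc Hcd Hd. apply (is_CRInt_of_deriv (Psi a) (fun t => Cdiv (phi a t) (CR (t ^ 2)))); auto.
    - intros; apply has_cderiv_Psi; lra.
    - intros; apply has_cderiv_phi_div_sq; lra. }
  unfold Phi. f_equal. apply Cint_open_eq; auto. split.
  - intros c d Hc Hcd Hd. eexists. apply HI; lra.
  - intros e He. destruct (Psi_tends_near1 a (e/2)) as [d1 [Hd1 P1]]; [lra|].
    destruct (has_cderiv_continuous_eps (Psi a) x _ (has_cderiv_Psi a x Hx) (e/2)) as [d2 [Hd2 P2]]; [lra|].
    exists (Rmin d1 d2). split. apply Rmin_pos; auto. intros c d Hc Hd Hcd.
    pose proof (Rmin_l d1 d2). pose proof (Rmin_r d1 d2).
    exists (Csub (Psi a d) (Psi a c)). split; [apply HI; lra|].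
    specialize (P1 c ltac:(lra)). specialize (P2 d ltac:(apply Rabs_def1; lra)).
    replace (Csub (Csub (Psi a d) (Psi a c)) (Psi a x))
      with (Csub (Csub (Psi a d) (Psi a x)) (Csub (Psi a c) (CR 0))) by (ceq; ring).
    eapply Rle_lt_trans. apply Cnorm_sub. lra. Qed.

Definition Phi_Mellin_integrand a s x := Cdiv (Phi a x) (Crpow x (Cadd s (CR 1))).

Lemma is_RInt_power_decay_le K c lo hi : 0 <= K -> 0 < c -> 1 < lo -> lo <= hi ->
  exists w, is_RInt (fun x => K * exp (- (1 + c) * ln x)) lo hi w /\ w <= K / c.
Proof. intros HK Hc Hlo Hhi.
  set (G := fun x => - (K / c) * exp (- c * ln x)).
  exists (G hi - G lo). split.
  - apply (is_RInt_of_deriv G (fun x => K * exp (- (1 + c) * ln x))); auto.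
    + intros x Hx. unfold G. eapply has_deriv_eq.
      * apply has_deriv_scal, has_deriv_exp, has_deriv_scal, derivable_pt_lim_ln. lra.
      * replace (- (1 + c) * ln x) with (- c * ln x + - ln x) by ring.
        rewrite exp_plus, exp_Ropp, exp_ln by lra. field. split; lra.
    + intros x Hx. eapply has_deriv_continuous.
      apply has_deriv_scal, (has_deriv_exp (fun t => - (1 + c) * ln t)), has_deriv_scal, derivable_pt_lim_ln. lra.
  - unfold G. assert (0 <= K / c) by (apply Rmult_le_pos; [lra|left; apply Rinv_0_lt_compat; lra]).
    assert (exp (- c * ln lo) <= 1).
    { rewrite <- exp_0. apply exp_le. pose proof (ln_pos lo Hlo). nra. }
    pose proof (exp_pos (- c * ln hi)). nra. Qed.

Section PhiMellin.
Variables (a s : Cplx).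
Hypotheses (Ha : 0 < Re a) (Hs : 1 < Re s) (Has : Re a < Re s).

Lemma Phi_Mellin_integrand_eq x : 1 < x -> Phi_Mellin_integrand a s x = Mellin_integrand a s x.
Proof. intro Hx. unfold Phi_Mellin_integrand, Mellin_integrand, Cdiv. rewrite Phi_eq by auto.
  assert (Cinv (Crpow x (Cadd s (CR 1))) = Cmul (Crpow x (Copp s)) (CR (/ x))).
  { unfold Crpow at 1. rewrite Cinv_Cexp.
    replace (Copp (Cmul (Cadd s (CR 1)) (CR (ln x)))) with (Cmul (Cadd (Copp s) (CR (-1))) (CR (ln x)))
      by (ceq; ring).
    fold (Crpow x (Cadd (Copp s) (CR (-1)))). rewrite Crpow_add, Crpow_m1 by lra. auto. }
  rewrite H. ceq; field; lra. Qed.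

Lemma has_cderiv_Mellin_integrand x : 1 < x -> exists l, has_cderiv (Mellin_integrand a s) x l.
Proof. intro Hx. eexists. unfold Mellin_integrand. apply has_cderiv_mul.
  apply has_cderiv_Psi; auto. apply has_cderiv_Crpow; lra. Qed.

Lemma Phi_Mellin_integrand_RInt c d : 1 < c -> c <= d ->
  is_CRInt (Phi_Mellin_integrand a s) c d (Csub (Mellin_primitive a s d) (Mellin_primitive a s c)).
Proof. intros Hc Hcd. apply (is_CRInt_of_deriv (Mellin_primitive a s) (Mellin_integrand a s)); auto.
  - intros; apply has_cderiv_Mellin_primitive; auto; lra.
  - intros; apply has_cderiv_Mellin_integrand; lra.
  - intros; apply Phi_Mellin_integrand_eq; lra. Qed.

Lemma Phi_Mellin_integrable : Leb_integrable_infty (Phi_Mellin_integrand a s) 1.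
Proof. split; [intros c d Hc Hcd; eexists; apply Phi_Mellin_integrand_RInt; auto|].
  destruct (Mellin_integrand_le a s Ha Hs Has) as [K [c' [HK [Hc' Hbound]]]].
  exists (K / c'). intros c d Hc Hcd.
  assert (Hcn : forall x, c <= x <= d -> continuity_pt (fun t => Cnorm (Phi_Mellin_integrand a s t)) x).
  { intros x Hx. destruct (has_cderiv_Mellin_integrand x ltac:(lra)) as [l Hl].
    apply (continuity_pt_locally_ext (fun t => Cnorm (Mellin_integrand a s t)) _ (x - 1)); [lra| |].
    - intros y Hy. unfold Rdist in Hy. apply Rabs_def2 in Hy. rewrite Phi_Mellin_integrand_eq; auto. lra.
    - apply (has_cderiv_Cnorm_continuous _ _ _ Hl). }
  pose (prg := continuity_implies_RiemannInt Hcd Hcn).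
  destruct (is_RInt_power_decay_le K c' c d HK Hc' Hc Hcd) as [w [[prh Hw] Hwle]].
  exists (RiemannInt prg). split; [exists prg; reflexivity|].
  apply Rle_trans with w; auto. rewrite <- Hw. apply RiemannInt_P19; auto.
  intros x Hx. rewrite Phi_Mellin_integrand_eq by lra. apply Hbound. lra. Qed.

Lemma Phi_Mellin_has_Cint : has_Cint_infty (Phi_Mellin_integrand a s) 1 (Mellin_value a s).
Proof. split; [intros c d Hc Hcd; eexists; apply Phi_Mellin_integrand_RInt; auto|].
  intros e He. destruct (Mellin_primitive_tends_near1 a s Hs (e/2)) as [d1 [Hd1 P1]]; [lra|].
  destruct (Mellin_primitive_tends_infty a s Ha Hs Has (e/2)) as [M PM]; [lra|].
  exists d1. split; auto. exists M. intros c d Hc Hd Hcd.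
  exists (Csub (Mellin_primitive a s d) (Mellin_primitive a s c)).
  split; [apply Phi_Mellin_integrand_RInt; lra|].
  replace (Csub (Csub (Mellin_primitive a s d) (Mellin_primitive a s c)) (Mellin_value a s)) with
    (Csub (Csub (Mellin_primitive a s d) (CR 0)) (Csub (Mellin_primitive a s c) (Copp (Mellin_value a s))))
    by (ceq; ring).
  eapply Rle_lt_trans. apply Cnorm_sub. specialize (P1 c Hc). specialize (PM d Hd). lra. Qed.

End PhiMellin.

Lemma Mellin_value_exp a s : ~ (Im a = 0 /\ 0 <= Re a) -> 1 < Re s -> Re a < Re s ->
  Csub (CR 1) (Cdiv s a) = Cexp (Cmul (Copp (Cmul s (Csub s (CR 1)))) (Mellin_value a s)).
Proof. intros Hn Hs Has.
  replace (Cmul (Copp (Cmul s (Csub s (CR 1)))) (Mellin_value a s)) with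
    (Cadd (Clog (Copp (Csub a s))) (Copp (Clog (Copp a)))).
  2: { unfold Mellin_value. set (X := Csub (Clog (Copp (Csub a s))) (Clog (Copp a))).
       transitivity (Cmul X (Cmul (Cmul s (Csub (CR 1) s)) (Cinv (Cmul s (Csub (CR 1) s))))).
       - rewrite Cmul_inv by (apply s_mul_one_sub_s_neq0; auto). unfold X. ceq; ring.
       - ceq; ring. }
  rewrite Cexp_add, <- Cinv_Cexp, !Cexp_Clog.
  - assert (Hp : Re a ^ 2 + Im a ^ 2 <> 0) by (intro h; nra).
    destruct a as [p q]. destruct s as [u v]. unfold Re, Im in *; cbn [fst snd] in *.
    assert (Hp' : (- p) ^ 2 + (- q) ^ 2 <> 0) by (intro h; nra).
    unfold Cdiv; ceq; field; try split; auto.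
  - rewrite Im_opp, Re_opp. intros [h1 h2]. apply Hn. split; lra.
  - rewrite Im_opp, Re_opp, Re_sub. intros [h1 h2]. lra. Qed.

Theorem mainTheorem10 (alpha s : Cplx) :
  ~ (Im alpha = 0 /\ 0 <= Re alpha) ->
  0 < Re alpha ->
  1 < Re s ->
  Re alpha < Re s ->
  Leb_integrable_infty (fun x => Cdiv (Phi alpha x) (Crpow x (Cadd s (CR 1)))) 1 /\
  exists I : Cplx,
    has_Cint_infty (fun x => Cdiv (Phi alpha x) (Crpow x (Cadd s (CR 1)))) 1 I /\
    Csub (CR 1) (Cdiv s alpha) = Cexp (Cmul (Copp (Cmul s (Csub s (CR 1)))) I).
Proof. intros Hn Ha Hs Has. split.
  - exact (Phi_Mellin_integrable alpha s Ha Hs Has).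
  - exists (Mellin_value alpha s). split.
    + exact (Phi_Mellin_has_Cint alpha s Ha Hs Has).
    + exact (Mellin_value_exp alpha s Hn Hs Has).
Qed.
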